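(* For $j\in\{1,2\}$ and $(\alpha,\beta)\in\mathbb{R}^2\setminus\{(0,0)\}$ let $\overline y_j$ be the solution of $\ddot y+(j^4+2)y+\frac32y^3=0$, $y(0)=\alpha$, $\dot y(0)=\beta$, with energy $E_j=\frac{\beta^2}{2}+(j^4+2)\frac{\alpha^2}{2}+\frac38\alpha^4$. (i) The first vertical mode is torsionally stable, i.e. the trivial solution of the system $\ddot\xi_1+\big(7+\frac{27}{2}\overline y_1(t)^2\big)\xi_1=0$, $\ddot\xi_2+\big(10+9\overline y_1(t)^2\big)\xi_2=0$ is Lyapunov stable, provided that $\|\overline y_1\|_\infty\le\frac1{\sqrt3}$, equivalently $E_1\le\frac{13}{24}$. (ii) The second vertical mode is torsionally stable, i.e. the trivial solution of the system $\ddot\xi_1+\big(7+9\overline y_2(t)^2\big)\xi_1=0$, $\ddot\xi_2+\big(10+\frac{27}{2}\overline y_2(t)^2\big)\xi_2=0$ is Lyapunov stable, provided that $\|\overline y_2\|_\infty\le\sqrt{32/51}$, equivalently $E_2\le\frac{5024}{867}$.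
   Context: These Hill systems are the linearizations, in the torsional variables $(z_1,z_2)$, of the two-mode system $\ddot y_1+3y_1+\frac92y_1z_1^2+3y_1z_2^2+3y_1y_2^2+\frac32y_1^3+6z_1z_2y_2=0$, $\ddot y_2+18y_2+\frac92y_2z_2^2+3y_2z_1^2+3y_2y_1^2+\frac32y_2^3+6z_1z_2y_1=0$, $\ddot z_1+7z_1+\frac{27}{2}z_1y_1^2+9z_1y_2^2+9z_1z_2^2+\frac92z_1^3+18y_1y_2z_2=0$, $\ddot z_2+10z_2+\frac{27}{2}z_2y_2^2+9z_2y_1^2+9z_2z_1^2+\frac92z_2^3+18y_1y_2z_1=0$, around the vertical modes $(\overline y_1,0,0,0)$ and $(0,\overline y_2,0,0)$ respectively. Stability of the trivial solution means solutions with small initial data remain small for all $t\ge0$. *)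

From Stdlib Require Import Reals Lra.
From Coquelicot Require Import Coquelicot.
Open Scope R_scope.

Definition duffing_sol (c alpha beta : R) (y dy : R -> R) : Prop :=
  y 0 = alpha /\ dy 0 = beta /\
  forall t : R, is_derive y t (dy t) /\
                is_derive dy t (- (c * y t + 3 / 2 * y t ^ 3)).

Definition energy (j : nat) (alpha beta : R) : R :=
  beta ^ 2 / 2 + (INR j ^ 4 + 2) * alpha ^ 2 / 2 + 3 / 8 * alpha ^ 4.

Definition sup_norm_le (y : R -> R) (b : R) : Prop :=
  forall t : R, Rabs (y t) <= b.

Definition hill_sol (a : R -> R) (x dx : R -> R) : Prop :=
  forall t : R, is_derive x t (dx t) /\ is_derive dx t (- (a t * x t)).

(* Lyapunov stability (forward in time, initial time 0, Euclidean norm of the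
   state (xi1, xi1', xi2, xi2')) of the trivial solution of the decoupled
   system  xi1'' + a1(t) xi1 = 0,  xi2'' + a2(t) xi2 = 0. *)
Definition lyapunov_stable_hill2 (a1 a2 : R -> R) : Prop :=
  forall eps : R, 0 < eps ->
  exists delta : R, 0 < delta /\
    forall x1 dx1 x2 dx2 : R -> R,
      hill_sol a1 x1 dx1 -> hill_sol a2 x2 dx2 ->
      x1 0 ^ 2 + dx1 0 ^ 2 + x2 0 ^ 2 + dx2 0 ^ 2 < delta ^ 2 ->
      forall t : R, 0 <= t ->
        x1 t ^ 2 + dx1 t ^ 2 + x2 t ^ 2 + dx2 t ^ 2 < eps ^ 2.

From Stdlib Require Import Reals Lra Psatz Classical.
From Coquelicot Require Import Coquelicot.
Open Scope R_scope.

(* The torsional equations are Hill equations [x'' + (p + r y(t)^2) x = 0] whose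
   coefficient has period [tau], the half period of the vertical mode: energy
   conservation puts the orbit of [y] on a circle in suitable phase coordinates, whence
   [y (t + tau) = - y t] with frequency [om = PI / tau] satisfying
   [c + 3/4 S <= om^2 <= c + 3/2 S], [S] being the maximum of [y^2]; energy also
   turns the bound on [|y|] into the bound on the energy.  Under that bound the
   coefficient lies in the first stability zone [(0, om^2]] or in the second one
   [(om^2, 4 om^2]], reaching the top only on a set without interior.  Sturm comparison
   with [sin (om t)] and [sin (2 om t)] then forbids a solution vanishing at both [t0]
   and [t0 + tau], so no solution has a real Floquet multiplier; the monodromy is then
   elliptic (trace in [(-2, 2)]) and all solutions are bounded uniformly in their
   initial data, which is Lyapunov stability. *)

(** * Calculus on the real line *)

Lemma is_derive_eq (f : R -> R) (x l l' : R) :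
  is_derive f x l -> l = l' -> is_derive f x l'.
Proof. now intros H <-. Qed.

(* Coquelicot's rules are stated with [plus], [scal], ...; these forms unify
   directly with [Rplus] and [Rmult]. *)
Lemma is_derive_extR (f g : R -> R) (x l : R) :
  (forall t, f t = g t) -> is_derive f x l -> is_derive g x l.
Proof. exact (is_derive_ext f g x l). Qed.

Lemma is_derive_plusR (f g : R -> R) (x df dg : R) :
  is_derive f x df -> is_derive g x dg -> is_derive (fun t => f t + g t) x (df + dg).
Proof. exact (is_derive_plus f g x df dg). Qed.

Lemma is_derive_minusR (f g : R -> R) (x df dg : R) :
  is_derive f x df -> is_derive g x dg -> is_derive (fun t => f t - g t) x (df - dg).
Proof. exact (is_derive_minus f g x df dg). Qed.

Lemma is_derive_multR (f g : R -> R) (x df dg : R) :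
  is_derive f x df -> is_derive g x dg ->
  is_derive (fun t => f t * g t) x (df * g x + f x * dg).
Proof. exact (Derive.is_derive_mult f g x df dg). Qed.

Lemma is_derive_scalR (f : R -> R) (k x df : R) :
  is_derive f x df -> is_derive (fun t => k * f t) x (k * df).
Proof. exact (is_derive_scal f x k df). Qed.

Lemma is_derive_oppR (f : R -> R) (x df : R) :
  is_derive f x df -> is_derive (fun t => - f t) x (- df).
Proof. exact (is_derive_opp f x df). Qed.

Lemma is_derive_sqrR (f : R -> R) (x df : R) :
  is_derive f x df -> is_derive (fun t => f t ^ 2) x (2 * f x * df).
Proof. intros H. eapply is_derive_eq; [apply (is_derive_pow f 2 x df H)|]. simpl; ring. Qed.

Lemma is_derive_compR (f g : R -> R) (x df dg : R) :
  is_derive f (g x) df -> is_derive g x dg -> is_derive (fun t => f (g t)) x (df * dg).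
Proof.
  intros H1 H2. eapply is_derive_eq; [apply (is_derive_comp f g x df dg H1 H2)|].
  apply Rmult_comm.
Qed.

Lemma is_derive_shift (f : R -> R) (x d df : R) :
  is_derive f (x + d) df -> is_derive (fun t => f (t + d)) x df.
Proof.
  intros H. eapply is_derive_eq; [apply (is_derive_compR f (fun t => t + d) x df 1 H)|].
  - auto_derive; [easy | ring].
  - ring.
Qed.

Lemma is_derive_continuity_pt (f : R -> R) (x l : R) :
  is_derive f x l -> continuity_pt f x.
Proof.
  intros H. apply continuity_pt_filterlim, (ex_derive_continuous f x). now exists l.
Qed.

Lemma mean_value (f df : R -> R) (a b : R) : a <= b ->
  (forall t, a <= t <= b -> is_derive f t (df t)) ->
  exists c, a <= c <= b /\ f b - f a = df c * (b - a).
Proof.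
  intros Hab H.
  destruct (MVT_gen f a b df) as [c [Hc Hd]];
    rewrite ?Rmin_left, ?Rmax_right in * by lra.
  - intros x Hx. apply H; lra.
  - intros x Hx. eapply is_derive_continuity_pt, H; lra.
  - now exists c.
Qed.

Lemma le_of_derive_nonneg (f df : R -> R) (a b : R) : a <= b ->
  (forall t, a <= t <= b -> is_derive f t (df t)) ->
  (forall t, a <= t <= b -> 0 <= df t) -> f a <= f b.
Proof.
  intros Hab H Hp. destruct (mean_value f df a b Hab H) as [c [Hc Hd]].
  assert (0 <= df c * (b - a)) by (apply Rmult_le_pos; [apply Hp; lra | lra]). lra.
Qed.

Lemma le_of_derive_nonpos (f df : R -> R) (a b : R) : a <= b ->
  (forall t, a <= t <= b -> is_derive f t (df t)) ->
  (forall t, a <= t <= b -> df t <= 0) -> f b <= f a.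
Proof.
  intros Hab H Hn.
  apply (le_of_derive_nonneg (fun t => - f t) (fun t => - df t)) in Hab; [lra | |].
  - intros t Ht. now apply is_derive_oppR, H.
  - intros t Ht. specialize (Hn t Ht). lra.
Qed.

Lemma lt_of_derive_pos (f df : R -> R) (a b : R) : a < b ->
  (forall t, a <= t <= b -> is_derive f t (df t)) ->
  (forall t, a <= t <= b -> 0 < df t) -> f a < f b.
Proof.
  intros Hab H Hp. destruct (mean_value f df a b (Rlt_le _ _ Hab) H) as [c [Hc Hd]].
  assert (0 < df c * (b - a)) by (apply Rmult_lt_0_compat; [apply Hp; lra | lra]). lra.
Qed.

Lemma derive_zero_const (f : R -> R) :
  (forall t, is_derive f t 0) -> forall t, f t = f 0.
Proof.
  intros H t. destruct (Rle_dec 0 t).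
  - destruct (mean_value f (fun _ => 0) 0 t r (fun s _ => H s)) as [c [_ Hc]]. lra.
  - destruct (mean_value f (fun _ => 0) t 0 ltac:(lra) (fun s _ => H s)) as [c [_ Hc]]. lra.
Qed.

Lemma primitive_linear_bounds (phi f : R -> R) (k K : R) : phi 0 = 0 ->
  (forall t, is_derive phi t (f t)) -> (forall t, k <= f t <= K) ->
  forall t, 0 <= t -> k * t <= phi t <= K * t.
Proof.
  intros H0 Hd Hf t Ht.
  assert (Hid : forall L s, is_derive (fun t => L * t) s L).
  { intros L s. eapply is_derive_eq; [apply is_derive_scalR, is_derive_id |].
    unfold one. simpl. ring. }
  split.
  - pose proof (le_of_derive_nonneg (fun t => phi t - k * t) (fun t => f t - k) 0 t Ht) as H.
    cbv beta in H. rewrite H0, Rmult_0_r in H. enough (0 - 0 <= phi t - k * t) by lra.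
    apply H; intros s _; [apply is_derive_minusR; auto | specialize (Hf s); lra].
  - pose proof (le_of_derive_nonneg (fun t => K * t - phi t) (fun t => K - f t) 0 t Ht) as H.
    cbv beta in H. rewrite H0, Rmult_0_r in H. enough (0 - 0 <= K * t - phi t) by lra.
    apply H; intros s _; [apply is_derive_minusR; auto | specialize (Hf s); lra].
Qed.

Lemma exp_le (x y : R) : x <= y -> exp x <= exp y.
Proof. intros [H | ->]; [now apply Rlt_le, exp_increasing | lra]. Qed.

Lemma continuity_pt_pos_nbhd (f : R -> R) (t : R) : continuity_pt f t -> 0 < f t ->
  exists eta, 0 < eta /\ forall s, Rabs (s - t) < eta -> 0 < f s.
Proof.
  intros Hc Hp. destruct (Hc (f t) Hp) as [eta [Heta Hd]].
  exists eta; split; auto. intros s Hs.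
  destruct (Req_dec s t) as [-> | Hne]; auto.
  assert (Hx := Hd s (conj (conj I (not_eq_sym Hne)) Hs)).
  unfold R_dist in Hx. apply Rabs_def2 in Hx. lra.
Qed.

Lemma continuity_pt_neg_nbhd (f : R -> R) (t : R) : continuity_pt f t -> f t < 0 ->
  exists eta, 0 < eta /\ forall s, Rabs (s - t) < eta -> f s < 0.
Proof.
  intros Hc Hn. destruct (continuity_pt_pos_nbhd (fun s => - f s) t) as [eta [He H]].
  - now apply continuity_pt_opp.
  - lra.
  - exists eta; split; auto. intros s Hs. specialize (H s Hs). lra.
Qed.

Lemma gronwall_forward (f df : R -> R) (C t0 t1 : R) : t0 <= t1 ->
  (forall t, t0 <= t <= t1 -> is_derive f t (df t)) ->
  (forall t, t0 <= t <= t1 -> df t <= C * f t) ->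
  f t1 <= f t0 * exp (C * (t1 - t0)).
Proof.
  intros Hle Hd Hb.
  set (g := fun t => f t * exp (- (C * (t - t0)))).
  assert (Hg : g t1 <= g t0).
  { apply (le_of_derive_nonpos g
      (fun t => df t * exp (- (C * (t - t0))) - C * f t * exp (- (C * (t - t0))))); auto.
    - intros t Ht. eapply is_derive_eq.
      + apply (is_derive_multR f (fun s => exp (- (C * (s - t0))))); [now apply Hd |].
        auto_derive; [easy | reflexivity].
      + unfold Rminus; ring.
    - intros t Ht. assert (0 < exp (- (C * (t - t0)))) by apply exp_pos.
      specialize (Hb t Ht). nra. }
  unfold g in Hg. rewrite Rminus_diag, Rmult_0_r, Ropp_0, exp_0, Rmult_1_r in Hg.
  rewrite exp_Ropp in Hg. assert (0 < exp (C * (t1 - t0))) by apply exp_pos.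
  apply Rmult_le_compat_r with (r := exp (C * (t1 - t0))) in Hg; [| lra].
  now rewrite Rmult_assoc, Rinv_l, Rmult_1_r in Hg by lra.
Qed.

Lemma gronwall_backward (f df : R -> R) (C t0 t1 : R) : t0 <= t1 ->
  (forall t, t0 <= t <= t1 -> is_derive f t (df t)) ->
  (forall t, t0 <= t <= t1 -> - (C * f t) <= df t) ->
  f t0 <= f t1 * exp (C * (t1 - t0)).
Proof.
  intros Hle Hd Hb.
  set (g := fun t => f t * exp (C * (t - t1))).
  assert (Hg : g t0 <= g t1).
  { apply (le_of_derive_nonneg g
      (fun t => df t * exp (C * (t - t1)) + C * f t * exp (C * (t - t1)))); auto.
    - intros t Ht. eapply is_derive_eq.
      + apply (is_derive_multR f (fun s => exp (C * (s - t1)))); [now apply Hd |].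
        auto_derive; [easy | reflexivity].
      + unfold Rminus; ring.
    - intros t Ht. assert (0 < exp (C * (t - t1))) by apply exp_pos.
      specialize (Hb t Ht). nra. }
  unfold g in Hg. rewrite Rminus_diag, Rmult_0_r, exp_0, Rmult_1_r in Hg.
  replace (C * (t0 - t1)) with (- (C * (t1 - t0))) in Hg by ring.
  rewrite exp_Ropp in Hg. assert (0 < exp (C * (t1 - t0))) by apply exp_pos.
  apply Rmult_le_compat_r with (r := exp (C * (t1 - t0))) in Hg; [| lra].
  now rewrite Rmult_assoc, Rinv_l, Rmult_1_r in Hg by lra.
Qed.

Lemma ivt_sign_change (f : R -> R) (p q : R) : p <= q ->
  (forall t, p <= t <= q -> continuity_pt f t) ->
  f p * f q <= 0 -> exists z, p <= z <= q /\ f z = 0.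
Proof.
  intros Hpq Hc Hs.
  destruct (Req_dec (f p) 0) as [E | E]; [exists p; split; auto; lra |].
  destruct (Req_dec (f q) 0) as [E' | E']; [exists q; split; auto; lra |].
  destruct (Rle_lt_or_eq_dec p q Hpq) as [Hlt | <-]; [| nra].
  destruct (Rlt_dec (f p) 0) as [Hn | Hn].
  - destruct (Ranalysis5.IVT_interv f p q Hc Hlt Hn) as [z [Hz1 Hz2]]; [nra |].
    now exists z.
  - destruct (Ranalysis5.IVT_interv (fun t => - f t) p q) as [z [Hz1 Hz2]];
      [| easy | lra | nra |].
    + intros t Ht. now apply continuity_pt_opp, Hc.
    + exists z; split; auto; lra.
Qed.

Lemma pos_of_nonvanishing (f : R -> R) (r m : R) :
  (forall t, Rmin r m <= t <= Rmax r m -> continuity_pt f t /\ f t <> 0) ->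
  0 < f m -> 0 < f r.
Proof.
  intros H Hm. destruct (Rlt_dec 0 (f r)) as [h | h]; auto. exfalso.
  destruct (Rle_dec r m) as [Hrm | Hrm].
  - rewrite Rmin_left, Rmax_right in H by lra.
    destruct (ivt_sign_change f r m Hrm) as [z [Hz1 Hz2]];
      [intros t Ht; now apply H | nra | now apply (H z)].
  - rewrite Rmin_right, Rmax_left in H by lra.
    destruct (ivt_sign_change f m r ltac:(lra)) as [z [Hz1 Hz2]];
      [intros t Ht; now apply H | nra | now apply (H z)].
Qed.

(** * Hill equations *)

(* Hill equation on [[0, +oo)] only: stability concerns forward time. *)
Definition hill_sol_pos (a x dx : R -> R) : Prop :=
  forall t, 0 <= t -> is_derive x t (dx t) /\ is_derive dx t (- (a t * x t)).

Definition phase_sq (x dx : R -> R) (t : R) : R := x t ^ 2 + dx t ^ 2.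

Definition hill_phase_bounded (a : R -> R) (K : R) : Prop :=
  forall x dx, hill_sol_pos a x dx -> forall t, 0 <= t -> phase_sq x dx t <= K * phase_sq x dx 0.

Lemma hill_sol_pos_of_hill_sol (a x dx : R -> R) :
  hill_sol a x dx -> hill_sol_pos a x dx.
Proof. intros H t _. apply H. Qed.

Lemma phase_sq_nonneg (x dx : R -> R) (t : R) : 0 <= phase_sq x dx t.
Proof. unfold phase_sq. nra. Qed.

Lemma hill_sol_lin (a x dx y dy : R -> R) (p q : R) :
  hill_sol_pos a x dx -> hill_sol_pos a y dy ->
  hill_sol_pos a (fun t => p * x t + q * y t) (fun t => p * dx t + q * dy t).
Proof.
  intros Hx Hy t Ht. destruct (Hx t Ht) as [Ax Bx], (Hy t Ht) as [Ay By].
  split; eapply is_derive_eq;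
    try (apply is_derive_plusR; apply is_derive_scalR; eassumption); ring.
Qed.

Lemma hill_sol_scal (a x dx : R -> R) (p : R) :
  hill_sol_pos a x dx -> hill_sol_pos a (fun t => p * x t) (fun t => p * dx t).
Proof.
  intros Hx t Ht. destruct (Hx t Ht) as [A B].
  split; eapply is_derive_eq; try (apply is_derive_scalR; eassumption); ring.
Qed.

Lemma hill_sol_opp (a x dx : R -> R) :
  hill_sol_pos a x dx -> hill_sol_pos a (fun t => - x t) (fun t => - dx t).
Proof.
  intros Hx t Ht. destruct (Hx t Ht) as [A B].
  split; eapply is_derive_eq; try (apply is_derive_oppR; eassumption); ring.
Qed.

Lemma hill_sol_shift (a x dx : R -> R) (tau : R) : 0 <= tau ->
  (forall t, 0 <= t -> a (t + tau) = a t) ->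
  hill_sol_pos a x dx -> hill_sol_pos a (fun t => x (t + tau)) (fun t => dx (t + tau)).
Proof.
  intros Htau Hper Hx t Ht. destruct (Hx (t + tau) ltac:(lra)) as [A B].
  split; apply is_derive_shift; [easy |]. now rewrite <- Hper.
Qed.

Lemma hill_sol_continuity_pt (a x dx : R -> R) (t : R) :
  hill_sol_pos a x dx -> 0 <= t -> continuity_pt x t.
Proof. intros H Ht. apply (is_derive_continuity_pt _ t (dx t)), (proj1 (H t Ht)). Qed.

Lemma hill_sol_continuity_pt_derive (a x dx : R -> R) (t : R) :
  hill_sol_pos a x dx -> 0 <= t -> continuity_pt dx t.
Proof. intros H Ht. apply (is_derive_continuity_pt _ t (- (a t * x t))), (proj2 (H t Ht)). Qed.

Lemma hill_wronskian_const (a x dx y dy : R -> R) :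
  hill_sol_pos a x dx -> hill_sol_pos a y dy ->
  forall t, 0 <= t -> x t * dy t - dx t * y t = x 0 * dy 0 - dx 0 * y 0.
Proof.
  intros Hx Hy t Ht.
  destruct (mean_value (fun s => x s * dy s - dx s * y s) (fun _ => 0) 0 t Ht)
    as [c [_ Hc]]; [| lra].
  intros s Hs. destruct (Hx s ltac:(lra)) as [Ax Bx], (Hy s ltac:(lra)) as [Ay By].
  eapply is_derive_eq; [apply is_derive_minusR; apply is_derive_multR; eassumption | ring].
Qed.

Section BoundedCoefficient.

Variables (a : R -> R) (B : R).
Hypothesis a_bound : forall t, 0 <= t -> Rabs (a t) <= B.

(* [(x^2 + x'^2)' = 2 (1 - a) x x'], so the phase energy grows at rate at most [1 + B]. *)
Lemma phase_sq_derive_bound (x dx : R -> R) (t : R) : 0 <= t ->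
  Rabs (2 * (1 - a t) * x t * dx t) <= (1 + B) * phase_sq x dx t.
Proof.
  intros Ht. specialize (a_bound t Ht). apply Rabs_le_between in a_bound.
  unfold phase_sq. rewrite !Rabs_mult, (Rabs_right 2) by lra.
  assert (H1 : 2 * Rabs (x t) * Rabs (dx t) <= x t ^ 2 + dx t ^ 2).
  { rewrite <- (pow2_abs (x t)), <- (pow2_abs (dx t)).
    assert (0 <= (Rabs (x t) - Rabs (dx t)) ^ 2) by apply pow2_ge_0. nra. }
  assert (H2 : Rabs (1 - a t) <= 1 + B) by (apply Rabs_le; lra).
  assert (0 <= Rabs (x t) * Rabs (dx t)) by (apply Rmult_le_pos; apply Rabs_pos).
  assert (0 <= Rabs (1 - a t)) by apply Rabs_pos.
  nra.
Qed.

Lemma phase_sq_growth (x dx : R -> R) : hill_sol_pos a x dx ->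
  forall t0 t1, 0 <= t0 <= t1 ->
  phase_sq x dx t1 <= phase_sq x dx t0 * exp ((1 + B) * (t1 - t0)) /\
  phase_sq x dx t0 <= phase_sq x dx t1 * exp ((1 + B) * (t1 - t0)).
Proof.
  intros H t0 t1 Ht.
  assert (Hd : forall t, t0 <= t <= t1 ->
    is_derive (phase_sq x dx) t (2 * (1 - a t) * x t * dx t)).
  { intros t Ht'. destruct (H t ltac:(lra)) as [A1 A2].
    eapply is_derive_eq; [apply is_derive_plusR; apply is_derive_sqrR; eassumption | ring]. }
  assert (Hb : forall t, t0 <= t <= t1 ->
    Rabs (2 * (1 - a t) * x t * dx t) <= (1 + B) * phase_sq x dx t)
    by (intros t Ht'; apply phase_sq_derive_bound; lra).
  split; [apply (gronwall_forward _ _ _ _ _ (proj2 Ht) Hd)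
         | apply (gronwall_backward _ _ _ _ _ (proj2 Ht) Hd)];
    intros t Ht'; specialize (Hb t Ht'); apply Rabs_le_between in Hb; lra.
Qed.

Lemma hill_sol_zero_of_zero_data (x dx : R -> R) (t0 : R) :
  hill_sol_pos a x dx -> 0 <= t0 -> x t0 = 0 -> dx t0 = 0 ->
  forall t, 0 <= t -> x t = 0 /\ dx t = 0.
Proof.
  intros H Ht0 Hx Hd t Ht.
  assert (Hz : phase_sq x dx t0 = 0) by (unfold phase_sq; rewrite Hx, Hd; ring).
  assert (Hle : phase_sq x dx t <= 0).
  { destruct (Rle_dec t0 t).
    - destruct (phase_sq_growth x dx H t0 t ltac:(lra)) as [G _]. rewrite Hz in G. lra.
    - destruct (phase_sq_growth x dx H t t0 ltac:(lra)) as [_ G]. rewrite Hz in G. lra. }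
  unfold phase_sq in Hle. split; nra.
Qed.

Lemma hill_sol_eq_of_init (x dx y dy : R -> R) :
  hill_sol_pos a x dx -> hill_sol_pos a y dy -> x 0 = y 0 -> dx 0 = dy 0 ->
  forall t, 0 <= t -> x t = y t /\ dx t = dy t.
Proof.
  intros Hx Hy E1 E2 t Ht.
  destruct (hill_sol_zero_of_zero_data _ _ 0 (hill_sol_lin a x dx y dy 1 (-1) Hx Hy)
              (Rle_refl 0)) with (t := t) as [F1 F2]; auto; lra.
Qed.

(* Cramer's rule applied to the initial data. *)
Lemma hill_sol_combination (u du v dv x dx : R -> R) :
  hill_sol_pos a u du -> hill_sol_pos a v dv -> hill_sol_pos a x dx ->
  u 0 * dv 0 - du 0 * v 0 <> 0 ->
  forall t, 0 <= t ->
    x t = (x 0 * dv 0 - dx 0 * v 0) / (u 0 * dv 0 - du 0 * v 0) * u t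
          + (u 0 * dx 0 - du 0 * x 0) / (u 0 * dv 0 - du 0 * v 0) * v t /\
    dx t = (x 0 * dv 0 - dx 0 * v 0) / (u 0 * dv 0 - du 0 * v 0) * du t
          + (u 0 * dx 0 - du 0 * x 0) / (u 0 * dv 0 - du 0 * v 0) * dv t.
Proof.
  intros Hu Hv Hx HW.
  apply hill_sol_eq_of_init; [exact Hx | now apply hill_sol_lin | field; exact HW
                             | field; exact HW].
Qed.

End BoundedCoefficient.

(** * Floquet theory *)

Definition no_real_multiplier (a : R -> R) (tau : R) : Prop :=
  forall v dv lam, hill_sol_pos a v dv ->
    (forall t, 0 <= t -> v (t + tau) = lam * v t /\ dv (t + tau) = lam * dv t) ->
    v 0 = 0 /\ dv 0 = 0.

Lemma proportional_of_det_eq0 (u1 u2 v1 v2 : R) : ~ (u1 = 0 /\ u2 = 0) ->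
  u1 * v2 - u2 * v1 = 0 -> exists lam, v1 = lam * u1 /\ v2 = lam * u2.
Proof.
  intros Hu Hdet. destruct (Req_dec u1 0) as [E | E].
  - assert (u2 <> 0) by tauto. exists (v2 / u2). subst u1. split; [| field; auto].
    assert (Hp : u2 * v1 = 0) by lra. destruct (Rmult_integral _ _ Hp); [contradiction |].
    subst v1. ring.
  - exists (v1 / u1). split; [field; auto |].
    apply (Rmult_eq_reg_l u1); auto. field_simplify; [lra | auto].
Qed.

Lemma sq_det_div_le (p q r s W : R) : W <> 0 ->
  ((p * s - q * r) / W) ^ 2 <= (p ^ 2 + q ^ 2) * (r ^ 2 + s ^ 2) / W ^ 2.
Proof.
  intros HW. assert (0 < W ^ 2) by now apply pow2_gt_0.
  unfold Rdiv. rewrite Rpow_mult_distr, pow_inv.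
  apply Rmult_le_compat_r; [now apply Rlt_le, Rinv_0_lt_compat |].
  assert (0 <= (p * r + q * s) ^ 2) by apply pow2_ge_0. nra.
Qed.

Section TwoTermRecurrence.

Variables (phi : R -> R) (q tau : R).
Hypothesis tau_nonneg : 0 <= tau.
Hypothesis phi_rec : forall t, 0 <= t -> phi (t + tau + tau) = - phi t + q * phi (t + tau).

(* Invariant quadratic form of the recurrence [u_{n+2} = q u_{n+1} - u_n];
   it is definite exactly when [|q| < 2]. *)
Let form (t : R) : R := phi t ^ 2 - q * phi t * phi (t + tau) + phi (t + tau) ^ 2.

Lemma recurrence_form_shift (n : nat) (t : R) : 0 <= t -> form (t + INR n * tau) = form t.
Proof.
  intros Ht. induction n as [| n IH].
  - simpl. now rewrite Rmult_0_l, Rplus_0_r.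
  - rewrite <- IH, S_INR. assert (0 <= INR n) by apply pos_INR. unfold form.
    replace (t + (INR n + 1) * tau) with (t + INR n * tau + tau) by ring.
    rewrite (phi_rec (t + INR n * tau)) by nra. ring.
Qed.

Lemma recurrence_sq_bound (n : nat) (s : R) : Rabs q < 2 -> 0 <= s ->
  phi (s + INR n * tau) ^ 2
    <= (1 + Rabs q / 2) / (1 - Rabs q / 2) * (phi s ^ 2 + phi (s + tau) ^ 2).
Proof.
  intros Hq Hs.
  assert (Hform : forall u v, (1 - Rabs q / 2) * (u ^ 2 + v ^ 2) <= u ^ 2 - q * u * v + v ^ 2
                              <= (1 + Rabs q / 2) * (u ^ 2 + v ^ 2)).
  { intros u v. assert (Huv : 2 * Rabs (u * v) <= u ^ 2 + v ^ 2).
    { rewrite Rabs_mult, <- (pow2_abs u), <- (pow2_abs v).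
      assert (0 <= (Rabs u - Rabs v) ^ 2) by apply pow2_ge_0. nra. }
    assert (Hqu : Rabs (q * (u * v)) <= Rabs q / 2 * (u ^ 2 + v ^ 2)).
    { rewrite Rabs_mult. assert (0 <= Rabs q) by apply Rabs_pos. nra. }
    apply Rabs_le_between in Hqu. split; nra. }
  assert (Hpos : 0 < 1 - Rabs q / 2) by lra.
  pose proof (recurrence_form_shift n s Hs) as Hinv. unfold form in Hinv.
  destruct (Hform (phi (s + INR n * tau)) (phi (s + INR n * tau + tau))) as [H1 _].
  destruct (Hform (phi s) (phi (s + tau))) as [_ H2].
  apply Rmult_le_reg_l with (1 - Rabs q / 2); [exact Hpos |].
  field_simplify; [| lra].
  assert (0 <= phi (s + INR n * tau + tau) ^ 2) by apply pow2_ge_0. nra.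
Qed.

End TwoTermRecurrence.

Lemma decompose_time (tau t : R) : 0 < tau -> 0 <= t ->
  exists n s, 0 <= s <= tau /\ t = s + INR n * tau.
Proof.
  intros Htau Ht. destruct (nfloor_ex (t / tau)) as [n [Hn1 Hn2]].
  { apply Rdiv_le_0_compat; lra. }
  exists n, (t - INR n * tau).
  apply Rmult_le_compat_r with (r := tau) in Hn1; [| lra].
  apply Rmult_lt_compat_r with (r := tau) in Hn2; [| lra].
  unfold Rdiv in *. rewrite Rmult_assoc, Rinv_l, Rmult_1_r in Hn1, Hn2 by lra.
  split; [split |]; lra.
Qed.

Section Floquet.

Variables (a : R -> R) (B tau : R).
Hypothesis a_bound : forall t, 0 <= t -> Rabs (a t) <= B.
Hypothesis tau_pos : 0 < tau.
Hypothesis a_periodic : forall t, 0 <= t -> a (t + tau) = a t.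
Hypothesis no_multiplier : no_real_multiplier a tau.

Section NontrivialSolution.

Variables x0 dx0 : R -> R.
Hypothesis x0_sol : hill_sol_pos a x0 dx0.
Hypothesis x0_nontrivial : ~ (x0 0 = 0 /\ dx0 0 = 0).

Let shift_sol : hill_sol_pos a (fun t => x0 (t + tau)) (fun t => dx0 (t + tau)).
Proof. apply hill_sol_shift; auto; lra. Qed.

Let not_proportional (lam : R) : x0 tau = lam * x0 0 -> dx0 tau = lam * dx0 0 -> False.
Proof.
  intros E1 E2. apply x0_nontrivial, (no_multiplier x0 dx0 lam x0_sol).
  apply (hill_sol_eq_of_init a B a_bound); [exact shift_sol | now apply hill_sol_scal
                                            | now rewrite Rplus_0_l | now rewrite Rplus_0_l].
Qed.

Lemma shift_wronskian_neq0 : x0 0 * dx0 tau - dx0 0 * x0 tau <> 0.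
Proof.
  intros HW. destruct (proportional_of_det_eq0 (x0 0) (dx0 0) (x0 tau) (dx0 tau))
    as [lam [E1 E2]]; [exact x0_nontrivial | exact HW |].
  exact (not_proportional lam E1 E2).
Qed.

(* The coefficient of [x0] is [-1] because the monodromy has determinant 1
   (constancy of the Wronskian). *)
Lemma monodromy_recurrence : exists q, forall t, 0 <= t ->
  x0 (t + tau + tau) = - x0 t + q * x0 (t + tau) /\
  dx0 (t + tau + tau) = - dx0 t + q * dx0 (t + tau).
Proof.
  pose proof shift_wronskian_neq0 as HW.
  assert (Hsol2 := hill_sol_shift a _ _ tau (Rlt_le _ _ tau_pos) a_periodic shift_sol).
  assert (Hwr := hill_wronskian_const a _ _ _ _ x0_sol shift_sol tau (Rlt_le _ _ tau_pos)).
  cbv beta in Hwr. rewrite !Rplus_0_l in Hwr.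
  pose proof (hill_sol_combination a B a_bound _ _ _ _ _ _ x0_sol shift_sol Hsol2) as Hc.
  cbv beta in Hc. rewrite !Rplus_0_l in Hc.
  exists ((x0 0 * dx0 (tau + tau) - dx0 0 * x0 (tau + tau))
            / (x0 0 * dx0 tau - dx0 0 * x0 tau)).
  intros t Ht. destruct (Hc HW t Ht) as [C1 C2].
  assert (Hm1 : (x0 (tau + tau) * dx0 tau - dx0 (tau + tau) * x0 tau)
                / (x0 0 * dx0 tau - dx0 0 * x0 tau) = -1).
  { rewrite <- Hwr. field. now rewrite <- Hwr in HW. }
  rewrite Hm1 in C1, C2.
  split; [rewrite C1 | rewrite C2]; ring.
Qed.

(* For [|q| >= 2] a real root [mu] of [mu^2 - q mu + 1] would be a Floquet multiplier
   of [x0 (t + tau) - mu x0 t]. *)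
Lemma monodromy_trace_lt_2 (q : R) : (forall t, 0 <= t ->
  x0 (t + tau + tau) = - x0 t + q * x0 (t + tau) /\
  dx0 (t + tau + tau) = - dx0 t + q * dx0 (t + tau)) -> Rabs q < 2.
Proof.
  intros Hrec. destruct (Rlt_dec (Rabs q) 2) as [h | h]; auto. exfalso.
  assert (Hq4 : 0 <= q ^ 2 - 4) by (apply Rnot_lt_le in h; rewrite <- (pow2_abs q); nra).
  set (mu := (q + sqrt (q ^ 2 - 4)) / 2).
  assert (Hmu : mu ^ 2 - q * mu + 1 = 0) by (unfold mu; pose proof (sqrt_sqrt _ Hq4); nra).
  assert (Hmu0 : mu <> 0) by (intros E; rewrite E in Hmu; lra).
  assert (Hqm : q - mu = / mu) by (apply (Rmult_eq_reg_r mu); [field_simplify |]; auto; nra).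
  destruct (no_multiplier _ _ (/ mu) (hill_sol_lin a _ _ _ _ 1 (- mu) shift_sol x0_sol))
    as [F1 F2].
  - intros t Ht. destruct (Hrec t Ht) as [G1 G2]. rewrite G1, G2.
    replace q with (mu + / mu) by lra. split; field; exact Hmu0.
  - cbv beta in F1, F2. rewrite Rplus_0_l in F1, F2. apply (not_proportional mu); lra.
Qed.

Lemma nontrivial_sol_bounded : exists M, 0 < M /\
  forall t, 0 <= t -> phase_sq x0 dx0 t <= M * phase_sq x0 dx0 0.
Proof.
  destruct monodromy_recurrence as [q Hrec].
  assert (Hq := monodromy_trace_lt_2 q Hrec).
  set (L := (1 + Rabs q / 2) / (1 - Rabs q / 2)).
  assert (HL : 0 < L) by (unfold L; apply Rdiv_lt_0_compat; pose proof (Rabs_pos q); lra).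
  set (G := exp ((1 + B) * (2 * tau))).
  assert (HG : 0 < G) by apply exp_pos.
  assert (HB0 : 0 <= B)
    by (pose proof (a_bound 0 (Rle_refl 0)); pose proof (Rabs_pos (a 0)); lra).
  assert (Hshort : forall s, 0 <= s <= 2 * tau -> phase_sq x0 dx0 s <= phase_sq x0 dx0 0 * G).
  { intros s Hs. destruct (phase_sq_growth a B a_bound x0 dx0 x0_sol 0 s ltac:(lra)) as [G1 _].
    eapply Rle_trans; [exact G1 |]. apply Rmult_le_compat_l; [apply phase_sq_nonneg |].
    apply exp_le, Rmult_le_compat_l; lra. }
  exists (2 * L * G). split; [nra |]. intros t Ht.
  destruct (decompose_time tau t tau_pos Ht) as [n [s [Hs ->]]].
  assert (Hx := recurrence_sq_bound x0 q tau (Rlt_le _ _ tau_pos)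
                 (fun u hu => proj1 (Hrec u hu)) n s Hq (proj1 Hs)).
  assert (Hd := recurrence_sq_bound dx0 q tau (Rlt_le _ _ tau_pos)
                 (fun u hu => proj2 (Hrec u hu)) n s Hq (proj1 Hs)).
  assert (H1 := Hshort s ltac:(lra)). assert (H2 := Hshort (s + tau) ltac:(lra)).
  fold L in Hx, Hd. unfold phase_sq in *.
  assert (L * (x0 s ^ 2 + dx0 s ^ 2 + (x0 (s + tau) ^ 2 + dx0 (s + tau) ^ 2))
          <= L * (2 * ((x0 0 ^ 2 + dx0 0 ^ 2) * G))) by (apply Rmult_le_compat_l; lra).
  lra.
Qed.

(* Every solution is a combination of [x0] and its shift, with coefficients
   bounded by Cauchy-Schwarz in terms of its initial data. *)
Lemma hill_sol_bounded_of_nontrivial : exists K, 0 < K /\ hill_phase_bounded a K.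
Proof.
  destruct nontrivial_sol_bounded as [M [HM Hbd]].
  pose proof shift_wronskian_neq0 as HW.
  set (W := x0 0 * dx0 tau - dx0 0 * x0 tau) in *.
  set (F0 := phase_sq x0 dx0 0). set (G0 := phase_sq x0 dx0 tau).
  set (C := (G0 + F0) / W ^ 2).
  assert (HF0 : 0 <= F0) by apply phase_sq_nonneg.
  assert (HC : 0 <= C).
  { apply Rdiv_le_0_compat; [| now apply pow2_gt_0].
    assert (0 <= G0) by apply phase_sq_nonneg. lra. }
  exists (2 * M * F0 * C + 1).
  split; [assert (0 <= M * F0 * C) by (apply Rmult_le_pos; nra); lra |].
  intros x dx Hx t Ht.
  destruct (hill_sol_combination a B a_bound _ _ _ _ _ _ x0_sol shift_sol Hx) with (t := t)
    as [Ex Ed]; cbv beta in *; rewrite ?Rplus_0_l in *; auto.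
  fold W in Ex, Ed.
  set (al := (x 0 * dx0 tau - dx 0 * x0 tau) / W) in *.
  set (be := (x0 0 * dx 0 - dx0 0 * x 0) / W) in *.
  set (N := phase_sq x dx 0). assert (HN : 0 <= N) by apply phase_sq_nonneg.
  assert (Hcoef : al ^ 2 + be ^ 2 <= C * N).
  { assert (al ^ 2 <= (x 0 ^ 2 + dx 0 ^ 2) * (x0 tau ^ 2 + dx0 tau ^ 2) / W ^ 2)
      by now apply sq_det_div_le.
    assert (be ^ 2 <= (x0 0 ^ 2 + dx0 0 ^ 2) * (x 0 ^ 2 + dx 0 ^ 2) / W ^ 2)
      by now apply sq_det_div_le.
    replace (C * N) with ((x 0 ^ 2 + dx 0 ^ 2) * (x0 tau ^ 2 + dx0 tau ^ 2) / W ^ 2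
                          + (x0 0 ^ 2 + dx0 0 ^ 2) * (x 0 ^ 2 + dx 0 ^ 2) / W ^ 2)
      by (unfold C, N, F0, G0, phase_sq; field; exact HW).
    lra. }
  assert (H1 := Hbd t Ht). assert (H2 := Hbd (t + tau) ltac:(lra)). fold F0 in H1, H2.
  assert (Hsum : phase_sq x dx t <= 2 * al ^ 2 * phase_sq x0 dx0 t
                                    + 2 * be ^ 2 * phase_sq x0 dx0 (t + tau)).
  { unfold phase_sq. rewrite Ex, Ed.
    assert (0 <= (al * x0 t - be * x0 (t + tau)) ^ 2) by apply pow2_ge_0.
    assert (0 <= (al * dx0 t - be * dx0 (t + tau)) ^ 2) by apply pow2_ge_0. nra. }
  pose proof (pow2_ge_0 al). pose proof (pow2_ge_0 be).
  assert (al ^ 2 * phase_sq x0 dx0 t <= al ^ 2 * (M * F0)) by (apply Rmult_le_compat_l; lra).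
  assert (be ^ 2 * phase_sq x0 dx0 (t + tau) <= be ^ 2 * (M * F0))
    by (apply Rmult_le_compat_l; lra).
  assert ((al ^ 2 + be ^ 2) * (M * F0) <= C * N * (M * F0))
    by (apply Rmult_le_compat_r; [apply Rmult_le_pos |]; lra).
  fold N. nra.
Qed.

End NontrivialSolution.

Lemma hill_sol_bounded : exists K, 0 < K /\ hill_phase_bounded a K.
Proof.
  destruct (classic (exists x0 dx0, hill_sol_pos a x0 dx0 /\ ~ (x0 0 = 0 /\ dx0 0 = 0)))
    as [[x0 [dx0 [Hx0 Hnz]]] | Hall].
  - exact (hill_sol_bounded_of_nontrivial x0 dx0 Hx0 Hnz).
  - exists 1. split; [lra |]. intros x dx Hx t Ht.
    assert (Hz : x 0 = 0 /\ dx 0 = 0) by (apply NNPP; intros Hn; apply Hall; now exists x, dx).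
    destruct Hz as [Z0 Z1].
    destruct (hill_sol_zero_of_zero_data a B a_bound x dx 0 Hx (Rle_refl 0) Z0 Z1 t Ht)
      as [E1 E2].
    unfold phase_sq. rewrite E1, E2, Z0, Z1. lra.
Qed.

End Floquet.

(** * Sturm comparison and the first two stability zones *)

Lemma lt_of_derive_nonneg_pos_near (f df : R -> R) (a b c eta : R) : a < c < b -> 0 < eta ->
  (forall t, a <= t <= b -> is_derive f t (df t)) ->
  (forall t, a <= t <= b -> 0 <= df t) ->
  (forall t, Rabs (t - c) < eta -> 0 < df t) -> f a < f b.
Proof.
  intros Hc Heta Hd Hnn Hpos.
  set (h := Rmin (eta / 2) (Rmin ((c - a) / 2) ((b - c) / 2))).
  assert (Hh : 0 < h) by (unfold h; repeat apply Rmin_glb_lt; lra).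
  assert (Hh1 : h <= eta / 2) by apply Rmin_l.
  assert (Hh2 : h <= (c - a) / 2) by (eapply Rle_trans; [apply Rmin_r | apply Rmin_l]).
  assert (Hh3 : h <= (b - c) / 2) by (eapply Rle_trans; [apply Rmin_r | apply Rmin_r]).
  assert (f a <= f (c - h))
    by (apply (le_of_derive_nonneg f df); intros; [| apply Hd | apply Hnn]; lra).
  assert (f (c - h) < f (c + h)).
  { apply (lt_of_derive_pos f df); [lra | intros; apply Hd; lra |].
    intros t Ht. apply Hpos, Rabs_def1; lra. }
  assert (f (c + h) <= f b)
    by (apply (le_of_derive_nonneg f df); intros; [| apply Hd | apply Hnn]; lra).
  lra.
Qed.

Lemma sign_of_nonvanishing (x : R -> R) (s s' : R) :
  (forall t, s < t < s' -> continuity_pt x t) -> (forall r, s < r < s' -> x r <> 0) ->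
  (forall r, s < r < s' -> 0 < x r) \/ (forall r, s < r < s' -> 0 < - x r).
Proof.
  intros Hc Hn. destruct (Rle_dec s' s) as [Hss | Hss]; [left; intros; lra |].
  set (m := (s + s') / 2). assert (Hm : s < m < s') by (unfold m; lra).
  assert (Hsub : forall r, s < r < s' -> forall t, Rmin r m <= t <= Rmax r m -> s < t < s').
  { intros r Hr t Ht. split.
    - apply Rlt_le_trans with (Rmin r m); [apply Rmin_glb_lt |]; lra.
    - apply Rle_lt_trans with (Rmax r m); [| apply Rmax_lub_lt]; lra. }
  destruct (Rlt_dec 0 (x m)) as [P | P]; [left | right]; intros r Hr.
  - apply (pos_of_nonvanishing x r m); auto.
    intros t Ht. specialize (Hsub r Hr t Ht). auto.
  - apply (pos_of_nonvanishing (fun t => - x t) r m).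
    + intros t Ht. specialize (Hsub r Hr t Ht).
      split; [now apply continuity_pt_opp, Hc | intros E; apply (Hn t); lra].
    + specialize (Hn m Hm). lra.
Qed.

Lemma first_zero_after (x : R -> R) (s e : R) : s < e ->
  (forall t, s <= t <= e -> continuity_pt x t) -> x e = 0 ->
  (exists eta, 0 < eta /\ forall r, s < r < s + eta -> x r <> 0) ->
  exists s', s < s' <= e /\ x s' = 0 /\ forall r, s < r < s' -> x r <> 0.
Proof.
  intros Hse Hc He [eta [Heta Hn]].
  set (P := fun t => s <= t <= e /\ forall r, s < r < t -> x r <> 0).
  assert (Hb : bound P) by (exists e; intros t [Ht _]; lra).
  assert (Hex : exists t, P t) by (exists s; split; [lra | intros r Hr; lra]).
  destruct (completeness P Hb Hex) as [T [HT1 HT2]].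
  set (t1 := Rmin (s + eta / 2) e).
  assert (Ht1 : P t1).
  { split; [split; [apply Rmin_glb; lra | apply Rmin_r] |].
    intros r Hr. apply Hn. assert (t1 <= s + eta / 2) by apply Rmin_l. lra. }
  assert (HTs : s < T).
  { assert (t1 <= T) by (apply HT1; auto). assert (s < t1) by (apply Rmin_glb_lt; lra). lra. }
  assert (HTe : T <= e) by (apply HT2; intros t [Ht _]; lra).
  assert (Hin : forall r, s < r < T -> x r <> 0).
  { intros r Hr. destruct (classic (exists t, P t /\ r < t)) as [[t [[_ Pt] Hrt]] | Hno].
    - apply Pt. lra.
    - exfalso. assert (T <= r); [| lra].
      apply HT2. intros t Pt. apply Rnot_lt_le. intros Hrt. apply Hno. now exists t. }
  exists T. split; [lra |]. split; auto.
  destruct (Req_dec T e) as [-> | HTne]; auto.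
  destruct (Req_dec (x T) 0) as [| Hxn]; auto. exfalso.
  destruct (continuity_pt_pos_nbhd (fun t => x t * x t) T) as [d [Hd Hdd]].
  { apply (continuity_pt_mult x x); apply Hc; lra. }
  { destruct (Rlt_dec 0 (x T)); [nra |]. assert (x T < 0) by lra. nra. }
  set (t2 := Rmin (T + d / 2) e).
  assert (Ht2 : P t2).
  { split; [split; [apply Rmin_glb; lra | apply Rmin_r] |].
    intros r Hr. destruct (Rlt_dec r T); [apply Hin; lra |].
    assert (t2 <= T + d / 2) by apply Rmin_l.
    assert (Hq := Hdd r ltac:(apply Rabs_def1; lra)). intros E. rewrite E in Hq. lra. }
  assert (T < t2) by (apply Rmin_glb_lt; lra).
  assert (t2 <= T) by (apply HT1; auto). lra.
Qed.

Definition sometimes_below (a : R -> R) (L : R) : Prop :=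
  forall s s', 0 <= s < s' -> exists ts, s < ts < s' /\ a ts < L.

Lemma sin_nonneg_half_period (Om s t : R) : 0 < Om -> s <= t <= s + PI / Om ->
  0 <= sin (Om * (t - s)).
Proof.
  intros HO Ht. apply sin_ge_0; [nra |].
  apply Rmult_le_reg_r with (/ Om); [now apply Rinv_0_lt_compat |].
  field_simplify; lra.
Qed.

Lemma sin_pos_half_period (Om s t : R) : 0 < Om -> s < t < s + PI / Om ->
  0 < sin (Om * (t - s)).
Proof.
  intros HO Ht. apply sin_gt_0; [nra |].
  apply Rmult_lt_reg_r with (/ Om); [now apply Rinv_0_lt_compat |].
  field_simplify; lra.
Qed.

(* [sin (K (t - s0))] solves [w'' + K^2 w = 0]; this is the Wronskian of [x] against it. *)
Definition sturm_wronskian (x dx : R -> R) (K s0 t : R) : R :=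
  dx t * sin (K * (t - s0)) - x t * (K * cos (K * (t - s0))).

Section Sturm.

Variables (a x dx : R -> R).
Hypothesis x_sol : hill_sol_pos a x dx.

Lemma sturm_wronskian_derive (K s0 t : R) : 0 <= t ->
  is_derive (sturm_wronskian x dx K s0) t ((K ^ 2 - a t) * x t * sin (K * (t - s0))).
Proof.
  intros Ht. destruct (x_sol t Ht) as [A B].
  assert (Hs : is_derive (fun t => sin (K * (t - s0))) t (K * cos (K * (t - s0))))
    by (auto_derive; [easy | unfold Rminus; ring]).
  assert (Hc : is_derive (fun t => K * cos (K * (t - s0))) t (- K ^ 2 * sin (K * (t - s0))))
    by (auto_derive; [easy | unfold Rminus; ring]).
  unfold sturm_wronskian.
  eapply is_derive_eq; [apply is_derive_minusR; apply is_derive_multR; eassumption |].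
  cbv beta. ring.
Qed.

Lemma sturm_wronskian_derive_continuity_pt (K s0 t : R) : 0 <= t -> continuity_pt a t ->
  continuity_pt (fun t => (K ^ 2 - a t) * x t * sin (K * (t - s0))) t.
Proof.
  intros Ht Ha.
  apply (continuity_pt_mult (fun t => (K ^ 2 - a t) * x t) (fun t => sin (K * (t - s0)))).
  - apply (continuity_pt_mult (fun t => K ^ 2 - a t) x).
    + apply (continuity_pt_minus (fun _ => K ^ 2) a); [| easy].
      apply continuity_pt_const. now intros u v.
    + now apply (hill_sol_continuity_pt a x dx).
  - eapply is_derive_continuity_pt with (l := K * cos (K * (t - s0))).
    auto_derive; [easy | unfold Rminus; ring].
Qed.

Lemma derive_nonpos_at_zero_after_pos (s s' : R) : 0 <= s < s' -> x s' = 0 ->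
  (forall r, s < r < s' -> 0 < x r) -> dx s' <= 0.
Proof.
  intros Hs Hx Hp. apply Rnot_lt_le. intros Hd.
  destruct (continuity_pt_pos_nbhd dx s') as [eta [He Heta]];
    [apply (hill_sol_continuity_pt_derive a x dx s' x_sol); lra | exact Hd |].
  set (h := Rmin (eta / 2) ((s' - s) / 2)).
  assert (Hh : 0 < h) by (apply Rmin_glb_lt; lra).
  assert (h <= eta / 2) by apply Rmin_l. assert (h <= (s' - s) / 2) by apply Rmin_r.
  destruct (mean_value x dx (s' - h) s' ltac:(lra)) as [c [Hc Hm]];
    [intros t Ht; apply (x_sol t); lra |].
  assert (0 < dx c) by (apply Heta, Rabs_def1; lra).
  assert (0 < x (s' - h)) by (apply Hp; lra).
  rewrite Hx in Hm. nra.
Qed.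

Lemma zero_isolated (B t0 : R) : (forall t, 0 <= t -> Rabs (a t) <= B) -> 0 <= t0 ->
  x t0 = 0 -> ~ (x 0 = 0 /\ dx 0 = 0) ->
  exists eta, 0 < eta /\ forall r, t0 < r < t0 + eta -> x r <> 0.
Proof.
  intros HB Ht0 Hx Hnz.
  assert (Hd : dx t0 <> 0)
    by (intros E; apply Hnz, (hill_sol_zero_of_zero_data a B HB x dx t0); auto; lra).
  assert (Hc := hill_sol_continuity_pt_derive a x dx t0 x_sol Ht0).
  assert (Hmvt : forall r, t0 < r -> exists c, t0 <= c <= r /\ x r = dx c * (r - t0)).
  { intros r Hr. destruct (mean_value x dx t0 r) as [c [Hc1 Hc2]]; [lra | |].
    - intros t Ht. apply (x_sol t); lra.
    - exists c. split; [easy | lra]. }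
  destruct (Rlt_dec 0 (dx t0)) as [P | P].
  - destruct (continuity_pt_pos_nbhd dx t0 Hc P) as [eta [He Heta]].
    exists eta. split; [easy |]. intros r Hr E.
    destruct (Hmvt r ltac:(lra)) as [c [Hc1 Hc2]].
    assert (0 < dx c) by (apply Heta, Rabs_def1; lra). nra.
  - destruct (continuity_pt_neg_nbhd dx t0 Hc ltac:(lra)) as [eta [He Heta]].
    exists eta. split; [easy |]. intros r Hr E.
    destruct (Hmvt r ltac:(lra)) as [c [Hc1 Hc2]].
    assert (dx c < 0) by (apply Heta, Rabs_def1; lra). nra.
Qed.

Lemma sturm_wronskian_at_start (K s0 : R) :
  sturm_wronskian x dx K s0 s0 = - K * x s0.
Proof. unfold sturm_wronskian. rewrite Rminus_diag, Rmult_0_r, sin_0, cos_0. ring. Qed.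

Lemma sturm_wronskian_at_half_period (K s0 : R) : 0 < K ->
  sturm_wronskian x dx K s0 (s0 + PI / K) = K * x (s0 + PI / K).
Proof.
  intros HK. unfold sturm_wronskian.
  replace (K * (s0 + PI / K - s0)) with PI by (field; lra). rewrite sin_PI, cos_PI. ring.
Qed.

(* Sturm comparison with [sin (Om (t - s))]: a positive hump of [x] is longer than [PI / Om]. *)
Lemma pos_hump_long (Om s s' : R) : 0 < Om -> 0 <= s < s' -> s' - s <= PI / Om ->
  x s = 0 -> x s' = 0 -> (forall r, s < r < s' -> 0 < x r) ->
  (forall t, 0 <= t -> a t <= Om ^ 2) -> (forall t, 0 <= t -> continuity_pt a t) ->
  sometimes_below a (Om ^ 2) -> False.
Proof.
  intros HO Hs HL Hx0 Hx1 Hp Ha Hac Hbelow.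
  destruct (Hbelow s s' Hs) as [ts [Hts Hats]].
  set (dW := fun t => (Om ^ 2 - a t) * x t * sin (Om * (t - s))).
  assert (Hnn : forall t, s <= t <= s' -> 0 <= dW t).
  { intros t Ht. unfold dW. apply Rmult_le_pos; [apply Rmult_le_pos |].
    - specialize (Ha t ltac:(lra)). lra.
    - destruct (Req_dec t s) as [-> | ]; [lra |]. destruct (Req_dec t s') as [-> | ]; [lra |].
      apply Rlt_le, Hp; lra.
    - apply sin_nonneg_half_period; lra. }
  destruct (continuity_pt_pos_nbhd dW ts) as [eta [He Heta]].
  { apply sturm_wronskian_derive_continuity_pt; [lra | apply Hac; lra]. }
  { unfold dW. apply Rmult_lt_0_compat; [apply Rmult_lt_0_compat |].
    - lra.
    - apply Hp; lra.
    - apply sin_pos_half_period; lra. }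
  assert (Hlt : sturm_wronskian x dx Om s s < sturm_wronskian x dx Om s s').
  { apply (lt_of_derive_nonneg_pos_near _ dW s s' ts eta); auto.
    intros t Ht. apply sturm_wronskian_derive. lra. }
  rewrite sturm_wronskian_at_start, Hx0 in Hlt. unfold sturm_wronskian in Hlt.
  rewrite Hx1 in Hlt.
  assert (dx s' <= 0) by (apply (derive_nonpos_at_zero_after_pos s s'); auto).
  assert (0 <= sin (Om * (s' - s))) by (apply sin_nonneg_half_period; lra).
  nra.
Qed.

(* For [a > Om^2], [x] oscillates faster than [sin (Om (t - t0))] and must vanish inside. *)
Lemma pos_hump_short (Om t0 : R) : 0 < Om -> 0 <= t0 ->
  x t0 = 0 -> x (t0 + PI / Om) = 0 -> (forall r, t0 < r < t0 + PI / Om -> 0 < x r) ->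
  (forall t, 0 <= t -> Om ^ 2 < a t) -> False.
Proof.
  intros HO Ht0 Hx0 Hx1 Hp Ha.
  assert (Htau : 0 < PI / Om) by (apply Rdiv_lt_0_compat; [apply PI_RGT_0 | easy]).
  set (dW := fun t => - ((Om ^ 2 - a t) * x t * sin (Om * (t - t0)))).
  assert (Hpos : forall t, t0 < t < t0 + PI / Om -> 0 < dW t).
  { intros t Ht. unfold dW.
    assert (0 < sin (Om * (t - t0))) by (apply sin_pos_half_period; lra).
    assert (0 < x t) by (apply Hp; lra). specialize (Ha t ltac:(lra)).
    assert (0 < x t * sin (Om * (t - t0))) by nra. nra. }
  assert (Hlt : - sturm_wronskian x dx Om t0 t0
                < - sturm_wronskian x dx Om t0 (t0 + PI / Om)).
  { apply (lt_of_derive_nonneg_pos_near (fun t => - sturm_wronskian x dx Om t0 t) dW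
             t0 (t0 + PI / Om) (t0 + PI / Om / 2)
             (PI / Om / 2)); try lra.
    - intros t Ht. apply is_derive_oppR, sturm_wronskian_derive. lra.
    - intros t Ht. destruct (Req_dec t t0) as [-> | ]; [unfold dW; rewrite Hx0; lra |].
      destruct (Req_dec t (t0 + PI / Om)) as [-> | ]; [unfold dW; rewrite Hx1; lra |].
      apply Rlt_le, Hpos; lra.
    - intros t Ht. apply Rabs_def2 in Ht. apply Hpos; lra. }
  rewrite sturm_wronskian_at_start, sturm_wronskian_at_half_period, Hx0, Hx1 in Hlt by easy.
  lra.
Qed.

Lemma pos_on_half_period_absurd (kap t0 : R) : 0 < kap -> 0 <= t0 ->
  (forall t, 0 <= t -> kap ^ 2 <= a t) ->
  (forall r, t0 <= r <= t0 + PI / kap -> 0 < x r) -> False.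
Proof.
  intros HK Ht0 Ha Hp.
  assert (Htau : 0 < PI / kap) by (apply Rdiv_lt_0_compat; [apply PI_RGT_0 | easy]).
  assert (Hle : sturm_wronskian x dx kap t0 (t0 + PI / kap) <= sturm_wronskian x dx kap t0 t0).
  { apply (le_of_derive_nonpos _ (fun t => (kap ^ 2 - a t) * x t * sin (kap * (t - t0))));
      [lra | intros t Ht; apply sturm_wronskian_derive; lra |].
    intros t Ht.
    assert (0 <= sin (kap * (t - t0))) by (apply sin_nonneg_half_period; lra).
    assert (0 < x t) by (apply Hp; lra). specialize (Ha t ltac:(lra)).
    assert (0 <= x t * sin (kap * (t - t0))) by nra. nra. }
  rewrite sturm_wronskian_at_start, sturm_wronskian_at_half_period in Hle by easy.
  assert (0 < x t0) by (apply Hp; lra). assert (0 < x (t0 + PI / kap)) by (apply Hp; lra).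
  nra.
Qed.

End Sturm.

Lemma zero_spacing_gt (a x dx : R -> R) (Om s s' : R) : hill_sol_pos a x dx -> 0 < Om ->
  0 <= s < s' -> x s = 0 -> x s' = 0 -> (forall r, s < r < s' -> x r <> 0) ->
  (forall t, 0 <= t -> a t <= Om ^ 2) -> (forall t, 0 <= t -> continuity_pt a t) ->
  sometimes_below a (Om ^ 2) -> PI / Om < s' - s.
Proof.
  intros Hx HO Hs Hx0 Hx1 Hn Ha Hac Hbelow. apply Rnot_le_lt. intros HL.
  destruct (sign_of_nonvanishing x s s') as [P | P]; auto.
  - intros t Ht. apply (hill_sol_continuity_pt a x dx); auto; lra.
  - exact (pos_hump_long a x dx Hx Om s s' HO Hs HL Hx0 Hx1 P Ha Hac Hbelow).
  - apply (pos_hump_long a (fun t => - x t) (fun t => - dx t) (hill_sol_opp a x dx Hx)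
             Om s s'); auto; cbv beta; [rewrite Hx0 | rewrite Hx1]; ring.
Qed.

Lemma zero_in_half_period_open (a x dx : R -> R) (Om t0 : R) : hill_sol_pos a x dx ->
  0 < Om -> 0 <= t0 -> x t0 = 0 -> x (t0 + PI / Om) = 0 ->
  (forall t, 0 <= t -> Om ^ 2 < a t) ->
  ~ (forall r, t0 < r < t0 + PI / Om -> x r <> 0).
Proof.
  intros Hx HO Ht0 Hx0 Hx1 Ha Hn.
  destruct (sign_of_nonvanishing x t0 (t0 + PI / Om)) as [P | P]; auto.
  - intros t Ht. apply (hill_sol_continuity_pt a x dx); auto; lra.
  - exact (pos_hump_short a x dx Hx Om t0 HO Ht0 Hx0 Hx1 P Ha).
  - apply (pos_hump_short a (fun t => - x t) (fun t => - dx t) (hill_sol_opp a x dx Hx)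
             Om t0); auto; cbv beta; [rewrite Hx0 | rewrite Hx1]; ring.
Qed.

Lemma zero_in_half_period (a x dx : R -> R) (kap t0 : R) : hill_sol_pos a x dx ->
  0 < kap -> 0 <= t0 -> (forall t, 0 <= t -> kap ^ 2 <= a t) ->
  exists r, t0 <= r <= t0 + PI / kap /\ x r = 0.
Proof.
  intros Hx HK Ht0 Ha. apply NNPP. intros Hno.
  assert (Htau : 0 < PI / kap) by (apply Rdiv_lt_0_compat; [apply PI_RGT_0 | easy]).
  assert (Hn : forall r, t0 <= r <= t0 + PI / kap -> x r <> 0)
    by (intros r Hr E; apply Hno; now exists r).
  assert (Hsub : forall r, t0 <= r <= t0 + PI / kap ->
            forall t, Rmin r t0 <= t <= Rmax r t0 -> t0 <= t <= t0 + PI / kap).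
  { intros r Hr t Ht. pose proof (Rmin_r r t0). pose proof (Rmax_r r t0).
    split; [apply Rle_trans with (Rmin r t0); [apply Rmin_glb |] |
            apply Rle_trans with (Rmax r t0); [| apply Rmax_lub]]; lra. }
  assert (Hcont : forall t, t0 <= t <= t0 + PI / kap -> continuity_pt x t)
    by (intros t Ht; apply (hill_sol_continuity_pt a x dx); auto; lra).
  destruct (Rlt_dec 0 (x t0)) as [P | P].
  - apply (pos_on_half_period_absurd a x dx Hx kap t0); auto.
    intros r Hr. apply (pos_of_nonvanishing x r t0); auto.
    intros t Ht. specialize (Hsub r Hr t Ht). auto.
  - assert (x t0 <> 0) by (apply Hn; lra).
    apply (pos_on_half_period_absurd a (fun t => - x t) (fun t => - dx t)
             (hill_sol_opp a x dx Hx) kap t0); auto.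
    intros r Hr. apply (pos_of_nonvanishing (fun t => - x t) r t0); [| lra].
    intros t Ht. specialize (Hsub r Hr t Ht).
    split; [now apply continuity_pt_opp, Hcont | intros E; apply (Hn t); lra].
Qed.

Lemma next_zero (a x dx : R -> R) (B t0 e : R) : hill_sol_pos a x dx ->
  (forall t, 0 <= t -> Rabs (a t) <= B) -> ~ (x 0 = 0 /\ dx 0 = 0) ->
  0 <= t0 < e -> x t0 = 0 -> x e = 0 ->
  exists s, t0 < s <= e /\ x s = 0 /\ forall r, t0 < r < s -> x r <> 0.
Proof.
  intros Hx HB Hnz Ht Hx0 Hxe. apply first_zero_after; auto; [lra | |].
  - intros t Ht'. apply (hill_sol_continuity_pt a x dx); auto; lra.
  - apply (zero_isolated a x dx Hx B); auto; lra.
Qed.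

(* Both zones rest on the same observation: a solution with real multiplier vanishes
   at [t0] and at [t0 + PI / om], which Sturm comparison forbids. *)
Lemma no_real_multiplier_first_zone (a : R -> R) (B om kap : R) : 0 < om -> 0 < kap ->
  (forall t, 0 <= t -> Rabs (a t) <= B) -> (forall t, 0 <= t -> continuity_pt a t) ->
  (forall t, 0 <= t -> kap ^ 2 <= a t) -> (forall t, 0 <= t -> a t <= om ^ 2) ->
  sometimes_below a (om ^ 2) -> no_real_multiplier a (PI / om).
Proof.
  intros Hom Hk HB Hc Hlo Hhi Hbelow v dv lam Hv Heig. apply NNPP. intros Hnz.
  assert (Htau : 0 < PI / om) by (apply Rdiv_lt_0_compat; [apply PI_RGT_0 | easy]).
  destruct (zero_in_half_period a v dv kap 0 Hv Hk (Rle_refl 0) Hlo) as [t0 [Ht0 Hz0]].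
  assert (Hz1 : v (t0 + PI / om) = 0) by (rewrite (proj1 (Heig t0 ltac:(lra))), Hz0; ring).
  destruct (next_zero a v dv B t0 (t0 + PI / om)) as [s [Hs [Hzs Hns]]]; auto; [lra |].
  assert (PI / om < s - t0) by (apply (zero_spacing_gt a v dv); auto; lra).
  lra.
Qed.

Lemma no_real_multiplier_second_zone (a : R -> R) (B om : R) : 0 < om ->
  (forall t, 0 <= t -> Rabs (a t) <= B) -> (forall t, 0 <= t -> continuity_pt a t) ->
  (forall t, 0 <= t -> om ^ 2 < a t) -> (forall t, 0 <= t -> a t <= (2 * om) ^ 2) ->
  sometimes_below a ((2 * om) ^ 2) -> no_real_multiplier a (PI / om).
Proof.
  intros Hom HB Hc Hlo Hhi Hbelow v dv lam Hv Heig. apply NNPP. intros Hnz.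
  assert (Htau : 0 < PI / om) by (apply Rdiv_lt_0_compat; [apply PI_RGT_0 | easy]).
  assert (Hhalf : PI / (2 * om) = PI / om / 2) by (field; lra).
  destruct (zero_in_half_period a v dv om 0 Hv Hom (Rle_refl 0))
    as [t0 [Ht0 Hz0]]; [intros t Ht; apply Rlt_le, Hlo, Ht |].
  assert (Hz1 : v (t0 + PI / om) = 0) by (rewrite (proj1 (Heig t0 ltac:(lra))), Hz0; ring).
  destruct (next_zero a v dv B t0 (t0 + PI / om)) as [s1 [Hs1 [Hz1' Hn1]]]; auto; [lra |].
  destruct (Req_dec s1 (t0 + PI / om)) as [-> | Hne].
  { now apply (zero_in_half_period_open a v dv om t0). }
  assert (PI / (2 * om) < s1 - t0) by (apply (zero_spacing_gt a v dv); auto; lra).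
  destruct (next_zero a v dv B s1 (t0 + PI / om)) as [s2 [Hs2 [Hz2 Hn2]]]; auto; [lra |].
  assert (PI / (2 * om) < s2 - s1) by (apply (zero_spacing_gt a v dv); auto; lra).
  lra.
Qed.

(** * The Duffing equation *)

Definition duffing_energy (c y v : R) : R := v ^ 2 / 2 + c * y ^ 2 / 2 + 3 / 8 * y ^ 4.

(* The potential energy as a function of [s = y^2]. *)
Definition duffing_potential (c s : R) : R := c / 2 * s + 3 / 8 * s ^ 2.

Lemma duffing_energy_conserved (c al be : R) (y dy : R -> R) :
  duffing_sol c al be y dy -> forall t, duffing_energy c (y t) (dy t) = duffing_energy c al be.
Proof.
  intros [H0 [H1 H]] t. rewrite <- H0, <- H1. unfold duffing_energy.
  apply (derive_zero_const (fun t => dy t ^ 2 / 2 + c * y t ^ 2 / 2 + 3 / 8 * y t ^ 4)).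
  intros s. destruct (H s) as [A B].
  apply (is_derive_extR (fun t => / 2 * dy t ^ 2 + c / 2 * y t ^ 2 + 3 / 8 * y t ^ 4));
    [intros t'; unfold Rdiv; ring |].
  eapply is_derive_eq.
  - apply is_derive_plusR; [apply is_derive_plusR |]; apply is_derive_scalR;
      [apply is_derive_sqrR | apply is_derive_sqrR | apply (is_derive_pow y 4 s (dy s))]; eauto.
  - simpl. field.
Qed.

Lemma duffing_potential_le_inv (c s1 s2 : R) : 0 < c -> 0 <= s1 -> 0 <= s2 ->
  duffing_potential c s1 <= duffing_potential c s2 -> s1 <= s2.
Proof. unfold duffing_potential. intros. nra. Qed.

(* If the energy exceeds the potential at level [b^2], the velocity stays bounded away
   from zero and [y] is unbounded. *)
Lemma duffing_sup_norm_iff (c al be b : R) (y dy : R -> R) : 0 < c -> 0 <= b ->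
  duffing_sol c al be y dy ->
  sup_norm_le y b <-> duffing_energy c al be <= duffing_potential c (b ^ 2).
Proof.
  intros Hc Hb Hd. pose proof (duffing_energy_conserved c al be y dy Hd) as HE.
  destruct Hd as [H0 [H1 H]]. unfold duffing_energy, duffing_potential in *.
  set (E0 := be ^ 2 / 2 + c * al ^ 2 / 2 + 3 / 8 * al ^ 4) in *.
  split.
  - intros Hs. apply Rnot_lt_le. intros Hlt.
    set (d := E0 - (c / 2 * b ^ 2 + 3 / 8 * (b ^ 2) ^ 2)).
    assert (Hd : 0 < d) by (unfold d; lra).
    assert (Hdy : forall t, 2 * d <= dy t ^ 2).
    { intros t. specialize (HE t). specialize (Hs t).
      assert (Hy2 : y t ^ 2 <= b ^ 2)
        by (rewrite <- (pow2_abs (y t)); apply pow_incr; split; [apply Rabs_pos | easy]).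
      unfold d. assert (0 <= y t ^ 2) by apply pow2_ge_0.
      assert (y t ^ 4 = (y t ^ 2) ^ 2) by ring. nra. }
    set (T := 1 + 2 * b ^ 2 / d).
    assert (HT : 1 <= T)
      by (unfold T; assert (0 <= 2 * b ^ 2 / d) by (apply Rdiv_le_0_compat; nra); lra).
    destruct (mean_value y dy 0 T ltac:(lra)) as [t1 [Ht1 Hm]]; [intros t _; apply H |].
    assert (E1 : 2 * d * T ^ 2 <= (y T - y 0) ^ 2).
    { rewrite Hm. specialize (Hdy t1). assert (0 <= T ^ 2) by apply pow2_ge_0.
      replace ((dy t1 * (T - 0)) ^ 2) with (dy t1 ^ 2 * T ^ 2) by ring. nra. }
    assert (E2 : (y T - y 0) ^ 2 <= 4 * b ^ 2).
    { pose proof (Hs T) as A1. pose proof (Hs 0) as A2.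
      apply Rabs_le_between in A1, A2. nra. }
    assert (E3 : 2 * d * T = 2 * d + 4 * b ^ 2) by (unfold T; field; lra).
    nra.
  - intros Hle t. specialize (HE t). apply Rabs_le.
    destruct (Rle_dec (y t ^ 2) (b ^ 2)) as [h | h]; [split; nra |].
    exfalso. assert (0 <= dy t ^ 2) by apply pow2_ge_0.
    assert (y t ^ 4 = (y t ^ 2) ^ 2) by ring. nra.
Qed.

(* The positive root [S] of [duffing_potential c S = E]: the maximum of [y^2] on the orbit. *)
Definition duffing_amplitude (c E : R) : R := 4 / 3 * (sqrt (c ^ 2 / 4 + 3 / 2 * E) - c / 2).

Lemma duffing_potential_amplitude (c E : R) : 0 <= E ->
  duffing_potential c (duffing_amplitude c E) = E.
Proof.
  intros HE. unfold duffing_potential, duffing_amplitude.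
  assert (HD := pow2_sqrt (c ^ 2 / 4 + 3 / 2 * E) ltac:(nra)). nra.
Qed.

Lemma duffing_amplitude_pos (c E : R) : 0 < c -> 0 < E -> 0 < duffing_amplitude c E.
Proof.
  intros Hc HE. unfold duffing_amplitude.
  assert (HD := pow2_sqrt (c ^ 2 / 4 + 3 / 2 * E) ltac:(nra)).
  pose proof (sqrt_pos (c ^ 2 / 4 + 3 / 2 * E)). nra.
Qed.

Lemma duffing_amplitude_nonneg (c E : R) : 0 <= E -> 0 <= duffing_amplitude c E.
Proof.
  intros HE. unfold duffing_amplitude.
  assert (c / 2 <= sqrt (c ^ 2 / 4 + 3 / 2 * E)); [| lra].
  destruct (Rle_dec (c / 2) 0) as [h | h]; [pose proof (sqrt_pos (c ^ 2 / 4 + 3 / 2 * E)); lra |].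
  rewrite <- (sqrt_pow2 (c / 2)) by lra. apply sqrt_le_1_alt. nra.
Qed.

Lemma duffing_energy_nonneg (c y v : R) : 0 < c -> 0 <= duffing_energy c y v.
Proof.
  intros Hc. unfold duffing_energy.
  assert (0 <= y ^ 4) by (replace (y ^ 4) with ((y ^ 2) ^ 2) by ring; apply pow2_ge_0).
  pose proof (pow2_ge_0 y). pose proof (pow2_ge_0 v). nra.
Qed.

Lemma duffing_energy_pos (c y v : R) : 0 < c -> (y, v) <> (0, 0) -> 0 < duffing_energy c y v.
Proof.
  intros Hc Hyv. unfold duffing_energy.
  assert (0 <= y ^ 4) by (replace (y ^ 4) with ((y ^ 2) ^ 2) by ring; apply pow2_ge_0).
  destruct (Req_dec y 0) as [-> | Hy].
  - assert (v <> 0) by (intros ->; now apply Hyv). assert (0 < v ^ 2) by now apply pow2_gt_0. nra.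
  - assert (0 < y ^ 2) by now apply pow2_gt_0. pose proof (pow2_ge_0 v). nra.
Qed.

Lemma exists_primitive (f : R -> R) : (forall t, continuous f t) ->
  exists F, F 0 = 0 /\ forall t, is_derive F t (f t).
Proof.
  intros Hf. exists (fun t => RInt f 0 t). split.
  - exact (@RInt_point R_CompleteNormedModule 0 f).
  - intros t. apply (is_derive_RInt f (fun t => RInt f 0 t) 0 t); [| apply Hf].
    apply filter_forall. intros b.
    apply (@RInt_correct R_CompleteNormedModule), (@ex_RInt_continuous R_CompleteNormedModule).
    intros z _. apply Hf.
Qed.

Lemma polar_angle (u v A : R) : 0 < A -> u ^ 2 + v ^ 2 = A ^ 2 ->
  exists th, A * sin th = u /\ A * cos th = v.
Proof.
  intros HA Huv.
  assert (Hv : -1 <= v / A <= 1).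
  { assert (v ^ 2 <= A ^ 2) by (pose proof (pow2_ge_0 u); lra).
    assert ((v / A) ^ 2 <= 1); [| split; nra].
    replace ((v / A) ^ 2) with (v ^ 2 * / A ^ 2) by (field; lra).
    apply Rmult_le_reg_r with (A ^ 2); [nra |].
    rewrite Rmult_assoc, Rinv_l, Rmult_1_r, Rmult_1_l by nra. lra. }
  assert (Hs : sqrt (1 - (v / A) * (v / A)) = Rabs u / A).
  { replace (1 - v / A * (v / A)) with ((Rabs u / A) ^ 2).
    2: { replace ((Rabs u / A) ^ 2) with (u ^ 2 / A ^ 2) by (rewrite <- (pow2_abs u); field; lra).
         replace (u ^ 2) with (A ^ 2 - v ^ 2) by lra. field. lra. }
    apply sqrt_pow2. apply Rdiv_le_0_compat; [apply Rabs_pos | lra]. }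
  destruct (Rle_dec 0 u) as [Hu | Hu].
  - exists (acos (v / A)). rewrite cos_acos, sin_acos by easy. unfold Rsqr. rewrite Hs.
    rewrite Rabs_right by lra. split; field; lra.
  - exists (- acos (v / A)). rewrite cos_neg, sin_neg, cos_acos, sin_acos by easy.
    unfold Rsqr. rewrite Hs, Rabs_left by lra. split; field; lra.
Qed.

Section DuffingOrbit.

Variables (c al be : R) (y dy : R -> R).
Hypothesis c_pos : 0 < c.
Hypothesis y_sol : duffing_sol c al be y dy.

Let S := duffing_amplitude c (duffing_energy c al be).

Lemma duffing_velocity_sq (t : R) : dy t ^ 2 = (S - y t ^ 2) * (c + 3 / 4 * (S + y t ^ 2)).
Proof.
  pose proof (duffing_energy_conserved c al be y dy y_sol t) as HE.
  pose proof (duffing_potential_amplitude c _ (duffing_energy_nonneg c al be c_pos)) as HV.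
  fold S in HV. rewrite <- HE in HV. unfold duffing_energy, duffing_potential in HV.
  replace ((S - y t ^ 2) * (c + 3 / 4 * (S + y t ^ 2)))
    with (2 * (c / 2 * S + 3 / 8 * S ^ 2) - c * y t ^ 2 - 3 / 4 * y t ^ 4) by field.
  lra.
Qed.

Lemma duffing_sq_le_amplitude (t : R) : y t ^ 2 <= S.
Proof.
  pose proof (duffing_velocity_sq t). pose proof (pow2_ge_0 (dy t)). pose proof (pow2_ge_0 (y t)).
  assert (0 <= S) by apply duffing_amplitude_nonneg, duffing_energy_nonneg, c_pos.
  nra.
Qed.

(* [y (t + tau) + y t] solves a Hill equation with bounded coefficient and zero data. *)
Lemma duffing_antiperiodic (tau : R) : y tau = - al -> dy tau = - be ->
  forall t, 0 <= t -> y (t + tau) = - y t.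
Proof.
  destruct y_sol as [Hy0 [Hdy0 Hder]]. intros Hyt Hdyt t Ht.
  set (q := fun t => y (t + tau) ^ 2 - y (t + tau) * y t + y t ^ 2).
  assert (Hsol : hill_sol_pos (fun t => c + 3 / 2 * q t)
                   (fun t => y (t + tau) + y t) (fun t => dy (t + tau) + dy t)).
  { intros s _. destruct (Hder s) as [A1 B1]. destruct (Hder (s + tau)) as [A2 B2].
    split; eapply is_derive_eq;
      try (apply is_derive_plusR; [apply is_derive_shift |]; eassumption); unfold q; ring. }
  assert (Hbound : forall t, 0 <= t -> Rabs (c + 3 / 2 * q t) <= c + 9 / 2 * S).
  { intros s _. unfold q. pose proof (duffing_sq_le_amplitude s).
    pose proof (duffing_sq_le_amplitude (s + tau)).
    pose proof (pow2_ge_0 (y (s + tau) - y s)). pose proof (pow2_ge_0 (y (s + tau) + y s)).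
    apply Rabs_le. split; nra. }
  destruct (hill_sol_zero_of_zero_data _ _ Hbound _ _ 0 Hsol (Rle_refl 0)) with (t := t)
    as [E _]; cbv beta; rewrite ?Rplus_0_l; [lra | lra | easy |].
  lra.
Qed.

Hypothesis nontrivial : (al, be) <> (0, 0).

Let S_pos : 0 < S.
Proof. apply duffing_amplitude_pos, duffing_energy_pos; auto. Qed.

(* [y^2 = S] on an interval would force [y' = y'' = 0] there, hence [y = 0] and [S = 0]. *)
Lemma duffing_sometimes_below : sometimes_below (fun t => y t ^ 2) S.
Proof.
  intros s s' Hss. apply NNPP. intros Hno.
  assert (Hmax : forall r, s < r < s' -> y r ^ 2 = S).
  { intros r Hr. pose proof (duffing_sq_le_amplitude r).
    apply Rle_antisym; [easy |]. apply Rnot_lt_le. intros Hlt. apply Hno. now exists r. }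
  assert (Hrest : forall r, s < r < s' -> dy r = 0).
  { intros r Hr. pose proof (duffing_velocity_sq r) as Hv.
    rewrite Hmax, Rminus_diag in Hv by easy.
    apply (Rsqr_0_uniq (dy r)). unfold Rsqr. lra. }
  set (s1 := s + (s' - s) / 3). set (s2 := s + 2 * (s' - s) / 3).
  destruct (mean_value dy (fun t => - (c * y t + 3 / 2 * y t ^ 3)) s1 s2) as [xi [Hxi Hm]].
  { unfold s1, s2; lra. }
  { intros t _. apply (proj2 (proj2 y_sol) t). }
  rewrite (Hrest s1), (Hrest s2) in Hm by (unfold s1, s2; lra).
  assert (Hy2 : y xi ^ 2 = S) by (apply Hmax; unfold s1, s2 in *; lra).
  assert (Hacc : y xi * (c + 3 / 2 * y xi ^ 2) = 0).
  { assert (s2 - s1 <> 0) by (unfold s1, s2; lra).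
    assert (Hp : - (c * y xi + 3 / 2 * y xi ^ 3) * (s2 - s1) = 0) by lra.
    destruct (Rmult_integral _ _ Hp); [| contradiction]. lra. }
  pose proof S_pos. pose proof (pow2_ge_0 (y xi)).
  destruct (Rmult_integral _ _ Hacc) as [Hy0 | Hc]; [rewrite Hy0 in Hy2 |]; lra.
Qed.

Let m (t : R) : R := sqrt (c + 3 / 4 * (S + y t ^ 2)).

Lemma phase_speed_sq (t : R) : m t ^ 2 = c + 3 / 4 * (S + y t ^ 2).
Proof. apply pow2_sqrt. pose proof S_pos. pose proof (pow2_ge_0 (y t)). lra. Qed.

Lemma phase_speed_pos (t : R) : 0 < m t.
Proof. apply sqrt_lt_R0. pose proof S_pos. pose proof (pow2_ge_0 (y t)). lra. Qed.

Lemma phase_speed_derive (t : R) : is_derive m t (3 / 4 * y t * dy t / m t).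
Proof.
  destruct (proj2 (proj2 y_sol) t) as [A _]. pose proof (phase_speed_pos t).
  eapply is_derive_eq.
  - apply (is_derive_sqrt (fun t => c + 3 / 4 * (S + y t ^ 2)) t (3 / 4 * (2 * y t * dy t))).
    + apply (is_derive_extR (fun t => c + 3 / 4 * S + 3 / 4 * y t ^ 2)); [intros; ring |].
      eapply is_derive_eq; [apply is_derive_plusR; [apply is_derive_const |];
                            apply is_derive_scalR, is_derive_sqrR, A |].
      simpl. unfold zero. simpl. ring.
    + pose proof S_pos. pose proof (pow2_ge_0 (y t)). lra.
  - fold (m t). field. lra.
Qed.

Let Z (t : R) : R := dy t / m t.

Lemma velocity_eq_phase_speed_mul (t : R) : dy t = m t * Z t.
Proof. unfold Z. field. pose proof (phase_speed_pos t). lra. Qed.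

Lemma normalized_velocity_derive (t : R) : is_derive Z t (- (m t * y t)).
Proof.
  destruct (proj2 (proj2 y_sol) t) as [_ B]. pose proof (phase_speed_pos t).
  eapply is_derive_eq; [apply (is_derive_div dy m t _ _ B (phase_speed_derive t)); lra |].
  apply (Rmult_eq_reg_l (m t ^ 4)); [| apply pow_nonzero; lra].
  field_simplify; [| lra].
  replace (m t ^ 4) with ((m t ^ 2) ^ 2) by ring.
  replace (m t ^ 5) with ((m t ^ 2) ^ 2 * m t) by ring.
  replace (m t ^ 3) with (m t ^ 2 * m t) by ring.
  rewrite phase_speed_sq, duffing_velocity_sq. field.
Qed.

Lemma normalized_orbit_circle (t : R) : y t ^ 2 + Z t ^ 2 = sqrt S ^ 2.
Proof.
  rewrite pow2_sqrt by lra. unfold Z. pose proof (phase_speed_pos t).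
  replace ((dy t / m t) ^ 2) with (dy t ^ 2 / m t ^ 2) by (field; lra).
  rewrite duffing_velocity_sq, phase_speed_sq. field.
  pose proof (pow2_ge_0 (y t)). lra.
Qed.

(* In the coordinates [(y, Z)] the orbit is the circle of radius [sqrt S], traversed
   with angular speed [m]. *)
Lemma duffing_phase : exists phi th0, phi 0 = 0 /\ (forall t, is_derive phi t (m t)) /\
  forall t, y t = sqrt S * sin (phi t + th0) /\ dy t = m t * (sqrt S * cos (phi t + th0)).
Proof.
  destruct (exists_primitive m) as [phi [Hphi0 Hphi]].
  { intros t. apply (ex_derive_continuous m t). eexists. apply phase_speed_derive. }
  destruct (polar_angle (y 0) (Z 0) (sqrt S)) as [th0 [Hs0 Hc0]];
    [now apply sqrt_lt_R0 | apply normalized_orbit_circle |].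
  exists phi, th0. split; [easy |]. split; [easy |].
  set (A := sqrt S) in *.
  set (D := fun t => (y t - A * sin (phi t + th0)) ^ 2 + (Z t - A * cos (phi t + th0)) ^ 2).
  assert (HD : forall t, is_derive D t 0).
  { intros t. destruct (proj2 (proj2 y_sol) t) as [Hy _].
    pose proof (normalized_velocity_derive t) as HZ.
    assert (Harg : is_derive (fun t => phi t + th0) t (m t)).
    { eapply is_derive_eq; [apply is_derive_plusR; [apply Hphi | apply is_derive_const] |].
      unfold zero. simpl. ring. }
    assert (Hs : is_derive (fun t => A * sin (phi t + th0)) t (A * (cos (phi t + th0) * m t)))
      by (apply is_derive_scalR, (is_derive_compR sin); [apply is_derive_sin | apply Harg]).
    assert (Hc : is_derive (fun t => A * cos (phi t + th0)) t
                   (A * (- sin (phi t + th0) * m t)))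
      by (apply is_derive_scalR, (is_derive_compR cos); [apply is_derive_cos | apply Harg]).
    eapply is_derive_eq;
      [apply is_derive_plusR; apply is_derive_sqrR; apply is_derive_minusR; eauto |].
    rewrite (velocity_eq_phase_speed_mul t). ring. }
  intros t. pose proof (derive_zero_const D HD t) as Ht.
  assert (HD0 : D 0 = 0) by (unfold D; rewrite Hphi0, Rplus_0_l, Hs0, Hc0; ring).
  rewrite HD0 in Ht. unfold D in Ht.
  pose proof (pow2_ge_0 (y t - A * sin (phi t + th0))).
  pose proof (pow2_ge_0 (Z t - A * cos (phi t + th0))).
  rewrite velocity_eq_phase_speed_mul. split; nra.
Qed.

(* [tau] is the time at which the phase has advanced by [PI]. *)
Lemma duffing_half_period : exists tau, 0 < tau /\ y tau = - al /\ dy tau = - be /\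
  sqrt (c + 3 / 4 * S) * tau <= PI <= sqrt (c + 3 / 2 * S) * tau.
Proof.
  pose proof PI_RGT_0 as HPI. destruct y_sol as [Hy0 [Hdy0 _]].
  destruct duffing_phase as [phi [th0 [Hphi0 [Hphi Hrep]]]].
  set (k := sqrt (c + 3 / 4 * S)). set (K := sqrt (c + 3 / 2 * S)).
  assert (Hk : 0 < k) by (apply sqrt_lt_R0; lra).
  assert (Hbounds : forall t, 0 <= t -> k * t <= phi t <= K * t).
  { apply (primitive_linear_bounds phi m); auto. intros t. split; apply sqrt_le_1_alt.
    - pose proof (pow2_ge_0 (y t)). lra.
    - pose proof (duffing_sq_le_amplitude t). lra. }
  assert (HPk : 0 < PI / k) by (apply Rdiv_lt_0_compat; lra).
  destruct (ivt_sign_change (fun t => phi t - PI) 0 (PI / k)) as [tau [Htau Hpt]]; [lra | | |].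
  - intros t _. apply continuity_pt_minus; [eapply is_derive_continuity_pt, Hphi |].
    apply continuity_pt_const. now intros u v.
  - rewrite Hphi0. destruct (Hbounds (PI / k) ltac:(lra)) as [Hlow _].
    replace (k * (PI / k)) with PI in Hlow by (field; lra). nra.
  - assert (Hphit : phi tau = PI) by lra.
    assert (Htau0 : 0 < tau).
    { destruct (Rle_lt_or_eq_dec 0 tau) as [h | <-]; [easy | easy |].
      rewrite Hphi0 in Hphit. lra. }
    assert (Hytau : y tau = - al).
    { rewrite (proj1 (Hrep tau)), Hphit, Rplus_comm, neg_sin, <- Hy0, (proj1 (Hrep 0)).
      rewrite Hphi0, Rplus_0_l. ring. }
    assert (Hm : m tau = m 0) by (unfold m; rewrite Hytau, Hy0; f_equal; ring).
    exists tau. split; [easy |]. split; [easy |]. split.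
    + rewrite (proj2 (Hrep tau)), Hphit, Rplus_comm, neg_cos, Hm, <- Hdy0, (proj2 (Hrep 0)).
      rewrite Hphi0, Rplus_0_l. ring.
    + rewrite <- Hphit. apply Hbounds. lra.
Qed.

Lemma duffing_frequency : exists tau, 0 < tau /\ (forall t, 0 <= t -> y (t + tau) = - y t) /\
  c + 3 / 4 * S <= (PI / tau) ^ 2 <= c + 3 / 2 * S.
Proof.
  destruct duffing_half_period as [tau [Htau [Hyt [Hdyt [Hk HK]]]]].
  exists tau. split; [easy |]. split; [now apply duffing_antiperiodic |].
  assert (Hom : 0 <= PI / tau) by (apply Rdiv_le_0_compat; [pose proof PI_RGT_0 |]; lra).
  split.
  - rewrite <- (pow2_sqrt (c + 3 / 4 * S)) by lra. apply pow_incr. split; [apply sqrt_pos |].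
    apply Rmult_le_reg_r with tau; [easy |]. field_simplify; lra.
  - rewrite <- (pow2_sqrt (c + 3 / 2 * S)) by lra. apply pow_incr. split; [easy |].
    apply Rmult_le_reg_r with tau; [easy |]. field_simplify; lra.
Qed.

End DuffingOrbit.

(** * Torsional stability of the vertical modes *)

Lemma lyapunov_stable_hill2_of_bounds (a1 a2 : R -> R) (K1 K2 : R) : 0 < K1 -> 0 < K2 ->
  hill_phase_bounded a1 K1 -> hill_phase_bounded a2 K2 ->
  lyapunov_stable_hill2 a1 a2.
Proof.
  intros HK1 HK2 B1 B2 eps Heps.
  assert (Hs : 0 < sqrt (K1 + K2)) by (apply sqrt_lt_R0; lra).
  exists (eps / sqrt (K1 + K2)). split; [now apply Rdiv_lt_0_compat |].
  intros x1 dx1 x2 dx2 H1 H2 Hi t Ht.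
  assert (Hd2 : (eps / sqrt (K1 + K2)) ^ 2 * (K1 + K2) = eps ^ 2).
  { replace ((eps / sqrt (K1 + K2)) ^ 2) with (eps ^ 2 / sqrt (K1 + K2) ^ 2) by (field; lra).
    rewrite pow2_sqrt by lra. field. lra. }
  specialize (B1 x1 dx1 (hill_sol_pos_of_hill_sol _ _ _ H1) t Ht).
  specialize (B2 x2 dx2 (hill_sol_pos_of_hill_sol _ _ _ H2) t Ht).
  unfold phase_sq in *.
  pose proof (pow2_ge_0 (x1 0)). pose proof (pow2_ge_0 (dx1 0)).
  pose proof (pow2_ge_0 (x2 0)). pose proof (pow2_ge_0 (dx2 0)).
  assert ((K1 + K2) * (x1 0 ^ 2 + dx1 0 ^ 2 + x2 0 ^ 2 + dx2 0 ^ 2)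
          < (K1 + K2) * (eps / sqrt (K1 + K2)) ^ 2) by (apply Rmult_lt_compat_l; lra).
  nra.
Qed.

Lemma sometimes_below_le (a : R -> R) (L L' : R) : L <= L' ->
  sometimes_below a L -> sometimes_below a L'.
Proof.
  intros HL H s s' Hs. destruct (H s s' Hs) as [ts [Hts Ha]]. exists ts. split; [easy | lra].
Qed.

(* With [om^2] between [c + 3/4 S] and [c + 3/2 S], a coefficient [p + r y^2] ranging in
   [[p, p + r S]] lies in the first zone [(0, om^2]] or in the second zone
   [(om^2, 4 om^2]] of the Hill equation of period [PI / om]. *)
Definition stability_zone (c S p r : R) : Prop :=
  0 < r /\ ((0 < p /\ p + r * S <= c + 3 / 4 * S) \/
            (c + 3 / 2 * S < p /\ p + r * S <= 4 * (c + 3 / 4 * S))).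

Lemma duffing_hill_bounded (c al be p r : R) (y dy : R -> R) : 0 < c -> (al, be) <> (0, 0) ->
  duffing_sol c al be y dy ->
  stability_zone c (duffing_amplitude c (duffing_energy c al be)) p r ->
  exists K, 0 < K /\ hill_phase_bounded (fun t => p + r * y t ^ 2) K.
Proof.
  intros Hc Hab Hsol Hzone.
  pose proof (duffing_amplitude_pos c _ Hc (duffing_energy_pos c al be Hc Hab)) as HS.
  set (S := duffing_amplitude c (duffing_energy c al be)) in *.
  destruct (duffing_frequency c al be y dy Hc Hsol Hab) as [tau [Htau [Hanti [Hlow Hhigh]]]].
  fold S in Hlow, Hhigh. set (om := PI / tau) in *.
  assert (Hom : 0 < om) by (apply Rdiv_lt_0_compat; [apply PI_RGT_0 | easy]).
  assert (Htom : PI / om = tau) by (unfold om; field; split; [lra | apply PI_neq0]).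
  destruct Hzone as [Hr Hzone].
  assert (Hp : 0 < p) by lra.
  set (a := fun t => p + r * y t ^ 2).
  assert (Hrange : forall t, p <= a t <= p + r * S).
  { intros t. unfold a. pose proof (pow2_ge_0 (y t)).
    assert (y t ^ 2 <= S) by apply (duffing_sq_le_amplitude c al be y dy Hc Hsol). nra. }
  assert (Hbound : forall t, 0 <= t -> Rabs (a t) <= p + r * S)
    by (intros t _; specialize (Hrange t); apply Rabs_le; lra).
  assert (Hcont : forall t, 0 <= t -> continuity_pt a t).
  { intros t _. eapply is_derive_continuity_pt.
    apply is_derive_plusR; [apply is_derive_const | apply is_derive_scalR, is_derive_sqrR].
    apply (proj1 (proj2 (proj2 Hsol) t)). }
  assert (Hbelow : sometimes_below a (p + r * S)).
  { intros s s' Hs. destruct (duffing_sometimes_below c al be y dy Hc Hsol Hab s s' Hs)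
      as [ts [Hts Hy]]. exists ts. split; [easy |]. unfold a. fold S in Hy. nra. }
  apply (hill_sol_bounded a (p + r * S) tau); auto.
  - intros t Ht. unfold a. rewrite (Hanti t Ht). ring.
  - rewrite <- Htom. destruct Hzone as [[_ Hz] | [Hz1 Hz2]].
    + apply (no_real_multiplier_first_zone a (p + r * S) om (sqrt p)); auto.
      * now apply sqrt_lt_R0.
      * intros t _. rewrite pow2_sqrt by lra. apply Hrange.
      * intros t _. specialize (Hrange t). lra.
      * apply (sometimes_below_le a (p + r * S)); [lra | easy].
    + apply (no_real_multiplier_second_zone a (p + r * S) om); auto.
      * intros t _. specialize (Hrange t). lra.
      * intros t _. specialize (Hrange t). lra.
      * apply (sometimes_below_le a (p + r * S)); [lra | easy].
Qed.

Lemma duffing_torsional_stable (c al be Sb p1 r1 p2 r2 : R) (y dy : R -> R) :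
  0 < c -> 0 <= Sb -> (al, be) <> (0, 0) -> duffing_sol c al be y dy ->
  duffing_energy c al be <= duffing_potential c Sb ->
  (forall S, 0 < S <= Sb -> stability_zone c S p1 r1 /\ stability_zone c S p2 r2) ->
  lyapunov_stable_hill2 (fun t => p1 + r1 * y t ^ 2) (fun t => p2 + r2 * y t ^ 2).
Proof.
  intros Hc HSb Hab Hsol HE Hzones.
  set (E := duffing_energy c al be) in *.
  assert (HE0 : 0 < E) by now apply duffing_energy_pos.
  assert (HS : 0 < duffing_amplitude c E) by now apply duffing_amplitude_pos.
  assert (HSle : duffing_amplitude c E <= Sb).
  { apply (duffing_potential_le_inv c); [easy | lra | easy |].
    now rewrite duffing_potential_amplitude by lra. }
  destruct (Hzones _ (conj HS HSle)) as [Hz1 Hz2].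
  destruct (duffing_hill_bounded c al be p1 r1 y dy Hc Hab Hsol Hz1) as [K1 [HK1 B1]].
  destruct (duffing_hill_bounded c al be p2 r2 y dy Hc Hab Hsol Hz2) as [K2 [HK2 B2]].
  exact (lyapunov_stable_hill2_of_bounds _ _ K1 K2 HK1 HK2 B1 B2).
Qed.

Lemma vertical_mode_torsional_stability (c b Eb p1 r1 p2 r2 al be : R) (y dy : R -> R) :
  (al, be) <> (0, 0) -> duffing_sol c al be y dy -> 0 < c -> 0 <= b ->
  duffing_potential c (b ^ 2) = Eb ->
  (forall S, 0 < S <= b ^ 2 -> stability_zone c S p1 r1 /\ stability_zone c S p2 r2) ->
  (sup_norm_le y b <-> duffing_energy c al be <= Eb) /\
  (sup_norm_le y b ->
     lyapunov_stable_hill2 (fun t => p1 + r1 * y t ^ 2) (fun t => p2 + r2 * y t ^ 2)).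
Proof.
  intros Hab Hsol Hc Hb HEb Hzones.
  pose proof (duffing_sup_norm_iff c al be b y dy Hc Hb Hsol) as Hiff. rewrite HEb in Hiff.
  split; [exact Hiff |]. intros Hsup.
  apply (duffing_torsional_stable c al be (b ^ 2) p1 r1 p2 r2 y dy); auto; [apply pow2_ge_0 |].
  rewrite HEb. now apply Hiff.
Qed.

Theorem theorem5p1 :
  (forall (alpha beta : R) (y dy : R -> R),
     (alpha, beta) <> (0, 0) ->
     duffing_sol (INR 1 ^ 4 + 2) alpha beta y dy ->
     (sup_norm_le y (1 / sqrt 3) <-> energy 1 alpha beta <= 13 / 24) /\
     (sup_norm_le y (1 / sqrt 3) ->
        lyapunov_stable_hill2 (fun t => 7 + 27 / 2 * y t ^ 2)
                              (fun t => 10 + 9 * y t ^ 2))) /\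
  (forall (alpha beta : R) (y dy : R -> R),
     (alpha, beta) <> (0, 0) ->
     duffing_sol (INR 2 ^ 4 + 2) alpha beta y dy ->
     (sup_norm_le y (sqrt (32 / 51)) <-> energy 2 alpha beta <= 5024 / 867) /\
     (sup_norm_le y (sqrt (32 / 51)) ->
        lyapunov_stable_hill2 (fun t => 7 + 9 * y t ^ 2)
                              (fun t => 10 + 27 / 2 * y t ^ 2))).
Proof.
  split; intros al be y dy Hab.
  - change (energy 1 al be) with (duffing_energy (INR 1 ^ 4 + 2) al be).
    replace (INR 1 ^ 4 + 2) with 3 by (simpl; ring). intros Hsol.
    assert (Hs3 : 0 < sqrt 3) by (apply sqrt_lt_R0; lra).
    assert (Hb : (1 / sqrt 3) ^ 2 = 1 / 3).
    { replace ((1 / sqrt 3) ^ 2) with (1 / sqrt 3 ^ 2) by (field; lra).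
      now rewrite pow2_sqrt by lra. }
    apply (vertical_mode_torsional_stability 3 (1 / sqrt 3) (13 / 24) 7 (27 / 2) 10 9 al be y dy);
      rewrite ?Hb; auto.
    + lra.
    + apply Rlt_le, Rdiv_lt_0_compat; lra.
    + unfold duffing_potential. field.
    + intros S HS. split; split; try lra; right; lra.
  - change (energy 2 al be) with (duffing_energy (INR 2 ^ 4 + 2) al be).
    replace (INR 2 ^ 4 + 2) with 18 by (simpl; ring). intros Hsol.
    assert (Hb : sqrt (32 / 51) ^ 2 = 32 / 51) by (apply pow2_sqrt; lra).
    apply (vertical_mode_torsional_stability 18 (sqrt (32 / 51)) (5024 / 867) 7 9 10 (27 / 2)
             al be y dy); rewrite ?Hb; auto.
    + lra.
    + apply sqrt_pos.
    + unfold duffing_potential. field.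
    + intros S HS. split; split; try lra; left; lra.
Qed.
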